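(* Let $K \subseteq \mathbb{R}$ be compact and let $\gamma: K \to \mathbb{H}$ be continuous. Then $\gamma \in C^1_{\mathbb{H}}(K)$ if and only if the Pansu difference quotients of $\gamma$ converge uniformly on $K$ to horizontal points, i.e. for every $a \in K$ there is a horizontal point $p_a \in \mathbb{R}^2 \times \{0\}$ such that $$\lim_{\substack{|b-a|\to 0\\ a,b\in K}} \left| \delta_{1/(b-a)}\left(\gamma(a)^{-1} * \gamma(b)\right) - p_a \right| = 0,$$ the limit being taken jointly over pairs $a \neq b$ in $K$ (that is, for every $\varepsilon>0$ there is $\delta>0$ such that the displayed quantity is $<\varepsilon$ for all $a,b\in K$ with $0<|b-a|<\delta$).
   Context: The Heisenberg group $\mathbb{H}$ is $\mathbb{R}^3$ with group law $(x,y,z)*(x',y',z') = (x+x',\,y+y',\,z+z'+2(yx'-xy'))$; the inverse is $(x,y,z)^{-1}=(-x,-y,-z)$. Dilations are $\delta_r(x,y,z) = (rx,ry,r^2 z)$ for $r \neq 0$. A point of $\mathbb{H}$ is horizontal if it lies in $\mathbb{R}^2\times\{0\}$. An absolutely continuous curve $\Gamma=(f,g,h):\mathbb{R}\to\mathbb{R}^3$ is horizontal if $h' = 2(f'g - fg')$ almost everywhere. $C^m(\mathbb{R})$ denotes the $m$-times continuously differentiable real functions $f$ with $\sup_{x\in\mathbb{R}}|f^{(m)}(x)|<\infty$, and $C^m(\mathbb{R},\mathbb{R}^3)$ the curves whose components lie in $C^m(\mathbb{R})$. For compact $K\subseteq\mathbb{R}$ and $\gamma:K\to\mathbb{H}$,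 one writes $\gamma \in C^m_{\mathbb{H}}(K)$ if there is a horizontal curve $\Gamma\in C^m(\mathbb{R},\mathbb{R}^3)$ with $\Gamma|_K=\gamma$. *)

From Stdlib Require Import Reals Rtopology.
From Coquelicot Require Import Coquelicot.
Open Scope R_scope.

Definition Hpt : Type := (R * R * R)%type.

Definition hmul (p q : Hpt) : Hpt :=
  let '(x, y, z) := p in let '(x', y', z') := q in
  (x + x', y + y', z + z' + 2 * (y * x' - x * y')).

Definition hinv (p : Hpt) : Hpt :=
  let '(x, y, z) := p in (- x, - y, - z).

Definition hdil (r : R) (p : Hpt) : Hpt :=
  let '(x, y, z) := p in (r * x, r * y, r * r * z).

Definition hsub (p q : Hpt) : Hpt :=
  let '(x, y, z) := p in let '(x', y', z') := q in (x - x', y - y', z - z').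

Definition enorm (p : Hpt) : R :=
  let '(x, y, z) := p in sqrt (x * x + y * y + z * z).

Definition horiz (v : R * R) : Hpt := (fst v, snd v, 0).

Definition null_set (N : R -> Prop) : Prop :=
  forall eps : R, 0 < eps ->
    exists a b : nat -> R,
      (forall n, a n <= b n) /\
      (forall t, N t -> exists n, a n < t < b n) /\
      (forall n, sum_f_R0 (fun k => b k - a k) n <= eps).

Definition abs_cont (f : R -> R) : Prop :=
  forall eps : R, 0 < eps -> exists delta : R, 0 < delta /\
    forall (n : nat) (a b : nat -> R),
      (forall i, (i <= n)%nat -> a i <= b i) ->
      (forall i j, (i < j <= n)%nat -> b i <= a j) ->
      sum_f_R0 (fun i => b i - a i) n < delta ->
      sum_f_R0 (fun i => Rabs (f (b i) - f (a i))) n < eps.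

Definition horizontal_curve (f g h : R -> R) : Prop :=
  abs_cont f /\ abs_cont g /\ abs_cont h /\
  null_set (fun t => ~ (ex_derive f t /\ ex_derive g t /\ ex_derive h t /\
      Derive h t = 2 * (Derive f t * g t - f t * Derive g t))).

Definition C1 (f : R -> R) : Prop :=
  (forall x, ex_derive f x) /\
  (forall x, continuous (Derive f) x) /\
  (exists M, forall x, Rabs (Derive f x) <= M).

Definition C1_H (K : R -> Prop) (gamma : R -> Hpt) : Prop :=
  exists f g h : R -> R, C1 f /\ C1 g /\ C1 h /\ horizontal_curve f g h /\
    forall t, K t -> gamma t = (f t, g t, h t).

Definition continuous_on_K (K : R -> Prop) (gamma : R -> Hpt) : Prop :=
  forall a, K a -> forall eps, 0 < eps -> exists delta, 0 < delta /\
    forall b, K b -> Rabs (b - a) < delta -> enorm (hsub (gamma b) (gamma a)) < eps.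

From Pilot Require Import Defs.
From Stdlib Require Import Reals Rtopology Lra Lia Psatz Classical ClassicalEpsilon
  FunctionalExtensionality.
From Coquelicot Require Import Coquelicot.
Open Scope R_scope.

(* (=>) A C^1 horizontal curve [(f, g, h)] is horizontal at every point: the defect
   [h' - 2 (f' g - f g')] is continuous and a null set contains no interval.  The first
   two Pansu components are chord slopes of [f] and [g]; the third is [phi b / (b - a)^2]
   for [phi t = h t - h a - 2 g a (f t - f a) + 2 f a (g t - g a)], and horizontality
   makes [phi' t] a combination of first-order Taylor remainders, so both converge
   uniformly on compact sets.

   (<=) Whitney extension.  Beyond [min K] and [max K] continue along the horizontal
   lines with directions [p].  On a bounded gap [(c, d)] take the chord, plus a
   polynomial correction matching the derivatives [p c] and [p d] at the ends, plus a
   bump whose amplitude solves a quadratic equation so that the area swept, which is what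
   the horizontal lift adds to the vertical coordinate, carries [gamma c] exactly to
   [gamma d]: the required area is the third Pansu component.  Uniform convergence makes
   every correction small on short gaps, which gives C^1 regularity across [K]. *)

Lemma Rabs_comb3_le (a b c x y z C : R) :
  Rabs x <= C -> Rabs y <= C -> Rabs z <= C ->
  Rabs (a * x + b * y + c * z) <= C * (Rabs a + Rabs b + Rabs c).
Proof.
  intros Hx Hy Hz.
  eapply Rle_trans; [apply Rabs_triang|].
  eapply Rle_trans; [apply Rplus_le_compat_r, Rabs_triang|].
  rewrite !Rabs_mult.
  pose proof (Rabs_pos a); pose proof (Rabs_pos b); pose proof (Rabs_pos c).
  nra.
Qed.

Lemma Rabs_div_le (u v w : R) : v <> 0 -> Rabs u <= w * Rabs v -> Rabs (u / v) <= w.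
Proof.
  intros Hv Hu; rewrite Rabs_div by exact Hv.
  apply Rmult_le_reg_r with (Rabs v); [apply Rabs_pos_lt, Hv|].
  field_simplify; [lra|apply Rabs_no_R0, Hv].
Qed.

Lemma continuity_pt_eps (f : R -> R) (x : R) :
  continuity_pt f x <->
  forall e, 0 < e -> exists d, 0 < d /\ forall t, Rabs (t - x) < d -> Rabs (f t - f x) < e.
Proof.
  split; intros H e He; destruct (H e He) as [d [Hd Ht]]; exists d; split; auto.
  - intros t Htx; destruct (Req_dec t x) as [->|Hne].
    + rewrite Rminus_eq_0, Rabs_R0; exact He.
    + apply (Ht t); repeat split; auto.
  - intros t [_ Htx]; apply Ht, Htx.
Qed.

Lemma Rabs_sub_le (x y : R) : Rabs (x - y) <= Rabs x + Rabs y.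
Proof. unfold Rminus; rewrite <- (Rabs_Ropp y); apply Rabs_triang. Qed.

Lemma continuity_pt_of_ex_derive (f : R -> R) (t : R) : ex_derive f t -> continuity_pt f t.
Proof.
  intros Hd; apply continuity_pt_filterlim.
  apply (ex_derive_continuous (K := R_AbsRing) (V := R_NormedModule)), Hd.
Qed.

Lemma MVT_between (E D : R -> R) (a b : R) : (forall t, is_derive E t (D t)) ->
  exists xi, Rmin a b <= xi <= Rmax a b /\ E b - E a = D xi * (b - a).
Proof.
  intros Hd; apply (MVT_gen E a b D).
  - intros x _; apply Hd.
  - intros x _; apply derivable_continuous_pt.
    exists (D x); apply is_derive_Reals, Hd.
Qed.

Lemma between_dist (a b x : R) : Rmin a b <= x <= Rmax a b -> Rabs (x - a) <= Rabs (b - a).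
Proof.
  unfold Rmin, Rmax; destruct (Rle_dec a b); intros H; unfold Rabs;
    repeat destruct Rcase_abs; lra.
Qed.

Lemma between_in (m M a b x : R) :
  m <= a <= M -> m <= b <= M -> Rmin a b <= x <= Rmax a b -> m <= x <= M.
Proof. unfold Rmin, Rmax; destruct (Rle_dec a b); lra. Qed.

Lemma between_split (a b k : R) :
  Rmin a b <= k <= Rmax a b -> Rabs (b - k) + Rabs (k - a) = Rabs (b - a).
Proof.
  unfold Rmin, Rmax; destruct (Rle_dec a b); intros H; unfold Rabs;
    repeat destruct Rcase_abs; lra.
Qed.

Lemma is_derive_of_taylor (E : R -> R) (a l : R) :
  (forall e, 0 < e -> exists d, 0 < d /\ forall b, Rabs (b - a) < d ->
     Rabs (E b - E a - l * (b - a)) <= e * Rabs (b - a)) ->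
  is_derive E a l.
Proof.
  intros Hsmall; apply is_derive_Reals; intros e He.
  destruct (Hsmall (e / 2)) as [d [Hd Hb]]; [lra|].
  exists (mkposreal d Hd); intros h Hh0 Hh; simpl in Hh.
  specialize (Hb (a + h)); replace (a + h - a) with h in Hb by ring.
  replace ((E (a + h) - E a) / h - l) with ((E (a + h) - E a - l * h) / h) by (field; exact Hh0).
  apply Rle_lt_trans with (e / 2); [apply Rabs_div_le; auto|lra].
Qed.

Lemma lipschitz_of_derive_bound (E D : R -> R) (B : R) :
  (forall t, is_derive E t (D t)) -> (forall t, Rabs (D t) <= B) ->
  forall a b, Rabs (E b - E a) <= B * Rabs (b - a).
Proof.
  intros Hd HB a b.
  destruct (MVT_between E D a b Hd) as [xi [_ ->]].
  rewrite Rabs_mult; apply Rmult_le_compat_r; [apply Rabs_pos|apply HB].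
Qed.

Lemma abs_cont_of_derive_bound (E D : R -> R) (B : R) :
  (forall t, is_derive E t (D t)) -> (forall t, Rabs (D t) <= B) -> abs_cont E.
Proof.
  intros Hd HB e He.
  assert (HB0 : 0 <= B) by (pose proof (HB 0); pose proof (Rabs_pos (D 0)); lra).
  exists (e / (B + 1)); split; [apply Rdiv_lt_0_compat; lra|].
  intros n a b Hab _ Hsum.
  assert (Hq : 0 < e / (B + 1)) by (apply Rdiv_lt_0_compat; lra).
  apply Rle_lt_trans with (B * sum_f_R0 (fun i => b i - a i) n).
  - rewrite scal_sum; apply sum_Rle; intros i Hi.
    pose proof (lipschitz_of_derive_bound E D B Hd HB (a i) (b i)) as Hl.
    rewrite (Rabs_pos_eq (b i - a i)) in Hl by (pose proof (Hab i Hi); lra); lra.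
  - assert (B * (e / (B + 1)) = e - e / (B + 1)) by (field; lra).
    assert (B * sum_f_R0 (fun i => b i - a i) n <= B * (e / (B + 1)))
      by (apply Rmult_le_compat_l; lra).
    lra.
Qed.

Lemma bounded_of_continuous_const_outside (D : R -> R) (m M : R) : m <= M ->
  (forall t, continuity_pt D t) ->
  (forall t, t < m -> D t = D m) -> (forall t, M < t -> D t = D M) ->
  exists B, forall t, Rabs (D t) <= B.
Proof.
  intros Hm Hc Hl Hr.
  destruct (continuity_ab_maj D m M Hm (fun c _ => Hc c)) as [tmax [Hmax Hin1]].
  destruct (continuity_ab_min D m M Hm (fun c _ => Hc c)) as [tmin [Hmin Hin2]].
  exists (Rmax (Rabs (D tmax)) (Rabs (D tmin))).
  assert (Hmid : forall t, m <= t <= M -> Rabs (D t) <= Rmax (Rabs (D tmax)) (Rabs (D tmin))).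
  { intros t Ht; pose proof (Hmax t Ht); pose proof (Hmin t Ht).
    pose proof (Rmax_l (Rabs (D tmax)) (Rabs (D tmin)));
    pose proof (Rmax_r (Rabs (D tmax)) (Rabs (D tmin))).
    pose proof (Rle_abs (D tmax)); pose proof (Rle_abs (- D tmin)).
    rewrite Rabs_Ropp in *; apply Rabs_le; lra. }
  intros t; destruct (Rlt_or_le t m) as [Ht|Ht]; [rewrite Hl by exact Ht; apply Hmid; lra|].
  destruct (Rlt_or_le M t) as [Ht'|Ht']; [rewrite Hr by exact Ht'; apply Hmid; lra|].
  apply Hmid; lra.
Qed.

Lemma C1_intro (E D : R -> R) (B : R) :
  (forall t, is_derive E t (D t)) -> (forall t, continuity_pt D t) ->
  (forall t, Rabs (D t) <= B) -> Defs.C1 E.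
Proof.
  intros Hd Hc HB; split; [|split].
  - intros x; exists (D x); apply Hd.
  - intros x; apply continuous_ext with D.
    + intros y; symmetry; apply is_derive_unique, Hd.
    + apply continuity_pt_filterlim, Hc.
  - exists B; intros x; rewrite (is_derive_unique _ _ _ (Hd x)); apply HB.
Qed.

(** * Null sets contain no interval *)

Lemma null_set_empty (N : R -> Prop) : (forall t, ~ N t) -> null_set N.
Proof.
  intros H e He; exists (fun _ => 0), (fun _ => 0); split; [|split].
  - intros; lra.
  - intros t Nt; contradiction (H t Nt).
  - intros n; rewrite sum_cte; lra.
Qed.

Lemma partial_sum_mono (f : nat -> R) (n N : nat) : (forall k, 0 <= f k) ->
  (n <= N)%nat -> sum_f_R0 f n <= sum_f_R0 f N.
Proof. intros Hf Hle; induction Hle as [|N' _ IH]; simpl; [lra|pose proof (Hf (S N')); lra]. Qed.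

Lemma term_le_partial_sum (f : nat -> R) (j N : nat) : (forall k, 0 <= f k) ->
  (j <= N)%nat -> f j <= sum_f_R0 f N.
Proof.
  intros Hf H; apply Rle_trans with (sum_f_R0 f j); [|apply partial_sum_mono; auto].
  destruct j; simpl; [lra|pose proof (cond_pos_sum f j Hf); lra].
Qed.

Definition overlap (a b : nat -> R) (x : R) (k : nat) (s : R) : R :=
  Rmax 0 (Rmin (b k) s - Rmax (a k) x).

Lemma overlap_nonneg (a b : nat -> R) (x : R) (k : nat) (s : R) : 0 <= overlap a b x k s.
Proof. apply Rmax_l. Qed.

Lemma overlap_mono (a b : nat -> R) (x : R) (k : nat) (s s' : R) :
  s <= s' -> overlap a b x k s <= overlap a b x k s'.
Proof.
  intros H; unfold overlap; apply Rle_max_compat_l.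
  unfold Rmin; destruct (Rle_dec (b k) s), (Rle_dec (b k) s'); lra.
Qed.

Lemma overlap_le (a b : nat -> R) (x : R) (k : nat) (s : R) :
  a k <= b k -> overlap a b x k s <= b k - a k.
Proof.
  intros H; unfold overlap; apply Rmax_lub; [lra|].
  pose proof (Rmin_l (b k) s); pose proof (Rmax_l (a k) x); lra.
Qed.

(* Supremum argument: the set of [s] in [[x, y]] such that [s - x] is bounded by finitely
   many overlaps of the [(a k, b k)] with [[x, s]] can be pushed to the right through any
   covering interval, hence contains [y]. *)
Lemma interval_length_le_cover (a b : nat -> R) (x y : R) :
  x <= y -> (forall n, a n <= b n) ->
  (forall t, x <= t <= y -> exists n, a n < t < b n) ->
  exists n, y - x <= sum_f_R0 (fun k => b k - a k) n.
Proof.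
  intros Hxy Hab Hcov.
  set (S := fun s => (x <= s <= y) /\
    exists n, s - x <= sum_f_R0 (fun k => overlap a b x k s) n).
  assert (Step : forall s j s', S s -> a j < s < b j -> s < s' < b j -> s' <= y -> S s').
  { intros s j s' [Hs [n Hn]] Hj Hs' Hy; split; [lra|exists (max n j)].
    assert (Hgain : overlap a b x j s' - overlap a b x j s = s' - s).
    { unfold overlap; rewrite !Rmin_right by lra.
      unfold Rmax at 2 4; destruct (Rle_dec (a j) x); rewrite !Rmax_right; lra. }
    assert (Hinc : forall k, 0 <= overlap a b x k s' - overlap a b x k s)
      by (intros k; pose proof (overlap_mono a b x k s s'); lra).
    pose proof (term_le_partial_sum _ j (max n j) Hinc ltac:(lia)) as Hj'.
    rewrite minus_sum in Hj'.
    pose proof (partial_sum_mono (fun k => overlap a b x k s) n (max n j)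
      (fun k => overlap_nonneg a b x k s) ltac:(lia)).
    lra. }
  assert (Sx : S x).
  { split; [lra|exists 0%nat]; simpl; rewrite Rminus_eq_0; apply overlap_nonneg. }
  destruct (completeness S) as [sg [Hub Hlub]].
  { exists y; intros s [Hs _]; lra. }
  { exists x; exact Sx. }
  assert (Hsg : x <= sg <= y) by (split; [apply Hub, Sx|apply Hlub; intros s [Hs _]; lra]).
  destruct (Hcov sg Hsg) as [j Hj].
  destruct (classic (exists s, S s /\ a j < s)) as [[s [Ss Hs]]|Hno].
  2: { exfalso.
       assert (Haj : is_upper_bound S (a j)).
       { intros s Ss; destruct (Rle_or_lt s (a j)); auto; exfalso; eauto. }
       pose proof (Hlub _ Haj); lra. }
  assert (Hs2 : s <= sg) by (apply Hub, Ss).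
  assert (Sy : S y).
  { destruct (Req_dec s y) as [<-|Hsy]; [exact Ss|].
    destruct (Rlt_or_le y (b j)) as [Hyb|Hyb].
    - apply (Step s j y Ss); destruct Ss as [[? ?] _]; lra.
    - exfalso.
      assert (Hmid : S ((sg + b j) / 2)) by (apply (Step s j _ Ss); lra).
      pose proof (Hub _ Hmid); lra. }
  destruct Sy as [_ [n Hn]]; exists n.
  apply Rle_trans with (sum_f_R0 (fun k => overlap a b x k y) n); [exact Hn|].
  apply sum_Rle; intros k _; apply overlap_le, Hab.
Qed.

Lemma null_set_no_ball (N : R -> Prop) (t0 r : R) : null_set N -> 0 < r ->
  ~ (forall t, Rabs (t - t0) < r -> N t).
Proof.
  intros HN Hr Hall.
  destruct (HN (r / 2)) as [a [b [Hab [Hc Hs]]]]; [lra|].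
  destruct (interval_length_le_cover a b (t0 - r / 2) (t0 + r / 2)) as [n Hn];
    [lra|exact Hab| |].
  { intros t Ht; apply Hc, Hall, Rabs_def1; lra. }
  specialize (Hs n); lra.
Qed.

(** * Pansu difference quotients in coordinates *)

Definition X1 (gamma : R -> Hpt) (t : R) : R := fst (fst (gamma t)).
Definition X2 (gamma : R -> Hpt) (t : R) : R := snd (fst (gamma t)).
Definition X3 (gamma : R -> Hpt) (t : R) : R := snd (gamma t).

Definition slope (x : R -> R) (a b : R) : R := (x b - x a) / (b - a).

Definition area_quot (gamma : R -> Hpt) (a b : R) : R :=
  (X3 gamma b - X3 gamma a + 2 * (X1 gamma a * X2 gamma b - X2 gamma a * X1 gamma b))
  / (b - a) ^ 2.

Definition pansu_quotient (gamma : R -> Hpt) (a b : R) : Hpt :=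
  hdil (/ (b - a)) (hmul (hinv (gamma a)) (gamma b)).

Definition pansu_conv (K : R -> Prop) (gamma : R -> Hpt) (p : R -> R * R) : Prop :=
  forall eps, 0 < eps -> exists delta, 0 < delta /\
    forall a b, K a -> K b -> 0 < Rabs (b - a) < delta ->
      enorm (hsub (pansu_quotient gamma a b) (horiz (p a))) < eps.

Definition pansu_conv_coords (K : R -> Prop) (gamma : R -> Hpt) (p : R -> R * R) : Prop :=
  forall eps, 0 < eps -> exists delta, 0 < delta /\
    forall a b, K a -> K b -> 0 < Rabs (b - a) < delta ->
      Rabs (slope (X1 gamma) a b - fst (p a)) < eps /\
      Rabs (slope (X2 gamma) a b - snd (p a)) < eps /\
      Rabs (area_quot gamma a b) < eps.

Lemma pansu_quotient_coords (gamma : R -> Hpt) (v : R * R) (a b : R) : a <> b ->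
  hsub (pansu_quotient gamma a b) (horiz v) =
  (slope (X1 gamma) a b - fst v, slope (X2 gamma) a b - snd v, area_quot gamma a b).
Proof.
  intros Hab; unfold pansu_quotient, slope, area_quot, X1, X2, X3.
  destruct (gamma a) as [[xa ya] za], (gamma b) as [[xb yb] zb], v as [v1 v2]; simpl.
  assert (b - a <> 0) by lra.
  f_equal; [f_equal|]; field; auto.
Qed.

Lemma slope_sym (x : R -> R) (a b : R) : a <> b -> slope x a b = slope x b a.
Proof. intros H; unfold slope; field; lra. Qed.

Lemma remainder_of_slope (x : R -> R) (l a b : R) : a <> b ->
  x b - x a - l * (b - a) = (slope x a b - l) * (b - a).
Proof. intros H; unfold slope; field; lra. Qed.

Lemma enorm_lt (u v w e : R) :
  Rabs u < e / 2 -> Rabs v < e / 2 -> Rabs w < e / 2 -> enorm (u, v, w) < e.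
Proof.
  intros Hu Hv Hw; unfold enorm.
  assert (0 < e) by (pose proof (Rabs_pos u); lra).
  rewrite <- (sqrt_pow2 e) by lra; apply sqrt_lt_1_alt; split; [nra|].
  apply Rabs_def2 in Hu; apply Rabs_def2 in Hv; apply Rabs_def2 in Hw; nra.
Qed.

Lemma enorm_ge_coords (u v w : R) :
  Rabs u <= enorm (u, v, w) /\ Rabs v <= enorm (u, v, w) /\ Rabs w <= enorm (u, v, w).
Proof.
  unfold enorm; repeat split; rewrite <- sqrt_Rsqr_abs; apply sqrt_le_1_alt;
    unfold Rsqr; nra.
Qed.

Lemma pansu_conv_iff_coords (K : R -> Prop) (gamma : R -> Hpt) (p : R -> R * R) :
  pansu_conv K gamma p <-> pansu_conv_coords K gamma p.
Proof.
  split; intros H e He.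
  - destruct (H e He) as [d [Hd Hclose]]; exists d; split; [exact Hd|].
    intros a b Ka Kb Hab; specialize (Hclose a b Ka Kb Hab).
    rewrite pansu_quotient_coords in Hclose
      by (intros ->; rewrite Rminus_eq_0, Rabs_R0 in Hab; lra).
    destruct (enorm_ge_coords (slope (X1 gamma) a b - fst (p a))
      (slope (X2 gamma) a b - snd (p a)) (area_quot gamma a b)) as (? & ? & ?).
    repeat split; lra.
  - destruct (H (e / 2)) as [d [Hd Hclose]]; [lra|]; exists d; split; [exact Hd|].
    intros a b Ka Kb Hab; destruct (Hclose a b Ka Kb Hab) as (? & ? & ?).
    rewrite pansu_quotient_coords by (intros ->; rewrite Rminus_eq_0, Rabs_R0 in Hab; lra).
    apply enorm_lt; assumption.
Qed.

(** * C^1 horizontal curves have uniformly convergent Pansu quotients *)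

Lemma continuity_pt_Derive_of_C1 (f : R -> R) (t : R) : Defs.C1 f -> continuity_pt (Derive f) t.
Proof. intros [_ [Hc _]]; apply continuity_pt_filterlim, Hc. Qed.

Lemma continuity_pt_of_C1 (f : R -> R) (t : R) : Defs.C1 f -> continuity_pt f t.
Proof. intros [Hd _]; apply continuity_pt_of_ex_derive, Hd. Qed.

Lemma horizontal_everywhere (f g h : R -> R) :
  Defs.C1 f -> Defs.C1 g -> Defs.C1 h -> horizontal_curve f g h ->
  forall t, Derive h t = 2 * (Derive f t * g t - f t * Derive g t).
Proof.
  intros Cf Cg Ch [_ [_ [_ Hnull]]] t0.
  set (defect := fun t => Derive h t - 2 * (Derive f t * g t - f t * Derive g t)).
  destruct (Req_dec (defect t0) 0) as [E|E]; [unfold defect in E; lra|exfalso].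
  assert (Hc : continuity_pt defect t0).
  { unfold defect.
    apply continuity_pt_minus; [apply continuity_pt_Derive_of_C1, Ch|].
    apply continuity_pt_mult; [apply continuity_pt_const; intros ? ?; reflexivity|].
    apply continuity_pt_minus; apply continuity_pt_mult;
      auto using continuity_pt_Derive_of_C1, continuity_pt_of_C1. }
  destruct (proj1 (continuity_pt_eps defect t0) Hc (Rabs (defect t0))) as [r [Hr Hball]];
    [apply Rabs_pos_lt, E|].
  apply (null_set_no_ball _ t0 r Hnull Hr).
  intros t Ht [_ [_ [_ Heq]]]; specialize (Hball t Ht).
  unfold defect in Hball at 1; rewrite Heq, Rminus_eq_0, Rminus_0_l, Rabs_Ropp in Hball; lra.
Qed.

Lemma C1_taylor_uniform (f : R -> R) (m M : R) : Defs.C1 f ->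
  forall e, 0 < e -> exists d, 0 < d /\ forall a b, m <= a <= M -> m <= b <= M ->
    Rabs (b - a) < d -> Rabs (f b - f a - Derive f a * (b - a)) <= e * Rabs (b - a).
Proof.
  intros Cf e He.
  destruct (Heine (Derive f) (fun c => m <= c <= M) (compact_P3 m M)
    (fun x _ => continuity_pt_Derive_of_C1 f x Cf) (mkposreal e He)) as [d Hunif].
  exists d; split; [apply cond_pos|]; intros a b Ha Hb Hab.
  destruct Cf as [Hdf _].
  destruct (MVT_between f (Derive f) a b (fun t => Derive_correct _ _ (Hdf t)))
    as [xi [Hxi ->]].
  replace (Derive f xi * (b - a) - Derive f a * (b - a))
    with ((Derive f xi - Derive f a) * (b - a)) by ring.
  rewrite Rabs_mult; apply Rmult_le_compat_r; [apply Rabs_pos|].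
  left; apply (Hunif xi a); [apply (between_in m M a b xi Ha Hb Hxi)|exact Ha|].
  pose proof (between_dist a b xi Hxi); lra.
Qed.

Lemma derive_bound_nonneg (f : R -> R) (B : R) : (forall t, Rabs (Derive f t) <= B) -> 0 <= B.
Proof. intros HB; pose proof (HB 0); pose proof (Rabs_pos (Derive f 0)); lra. Qed.

(* With [phi t = h t - h a - 2 g a (f t - f a) + 2 f a (g t - g a)], horizontality gives
   [phi' t = 2 (g' t R_f(t, a) - f' t R_g(t, a))] with the Taylor remainders
   [R_f(t, a) = f a - f t - f' t (a - t) = o(a - t)], so [phi b = o((b - a)^2)]. *)
Lemma area_quot_uniform (f g h : R -> R) (m M : R) :
  Defs.C1 f -> Defs.C1 g -> (forall t, ex_derive h t) ->
  (forall t, Derive h t = 2 * (Derive f t * g t - f t * Derive g t)) ->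
  forall e, 0 < e -> exists d, 0 < d /\ forall a b, m <= a <= M -> m <= b <= M ->
    Rabs (b - a) < d ->
    Rabs (h b - h a + 2 * (f a * g b - g a * f b)) <= e * (b - a) ^ 2.
Proof.
  intros Cf Cg Hdh Hhor e He.
  pose proof Cf as [Hdf [_ [Bf HBf]]]; pose proof Cg as [Hdg [_ [Bg HBg]]].
  pose proof (derive_bound_nonneg f Bf HBf); pose proof (derive_bound_nonneg g Bg HBg).
  set (w := e / (2 * (Bf + Bg) + 1)).
  assert (Hw : 0 < w) by (apply Rdiv_lt_0_compat; lra).
  assert (Hwe : 2 * (Bf + Bg) * w <= e).
  { unfold w; apply Rmult_le_reg_r with (2 * (Bf + Bg) + 1); [lra|].
    field_simplify; nra. }
  destruct (C1_taylor_uniform f m M Cf w Hw) as [df [Hdf0 Tf]].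
  destruct (C1_taylor_uniform g m M Cg w Hw) as [dg [Hdg0 Tg]].
  exists (Rmin df dg); split; [apply Rmin_pos; lra|].
  intros a b Ha Hb Hab; pose proof (Rmin_l df dg); pose proof (Rmin_r df dg).
  set (phi := fun t => h t - h a - 2 * g a * (f t - f a) + 2 * f a * (g t - g a)).
  set (dphi := fun t => 2 * (Derive g t * (f a - f t - Derive f t * (a - t))
                             - Derive f t * (g a - g t - Derive g t * (a - t)))).
  assert (Hphi : forall t, is_derive phi t (dphi t)).
  { intros t; unfold phi, dphi; auto_derive; [repeat split; auto|].
    change (fun x => h x) with h; change (fun x => f x) with f;
    change (fun x => g x) with g; rewrite Hhor; ring. }
  destruct (MVT_between phi dphi a b Hphi) as [xi [Hxi Hmvt]].
  assert (Hxa : Rabs (a - xi) <= Rabs (b - a))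
    by (rewrite Rabs_minus_sym; apply between_dist, Hxi).
  assert (Xxi : m <= xi <= M) by apply (between_in m M a b xi Ha Hb Hxi).
  pose proof (Rabs_pos (a - xi)).
  assert (Hu := Tf xi a Xxi Ha ltac:(lra)); assert (Hv := Tg xi a Xxi Ha ltac:(lra)).
  assert (Hd : Rabs (dphi xi) <= e * Rabs (b - a)).
  { unfold dphi; rewrite Rabs_mult, (Rabs_pos_eq 2) by lra.
    eapply Rle_trans; [apply Rmult_le_compat_l; [lra|apply Rabs_sub_le]|].
    rewrite !Rabs_mult.
    pose proof (Rmult_le_compat _ _ _ _ (Rabs_pos _) (Rabs_pos _) (HBg xi) Hu).
    pose proof (Rmult_le_compat _ _ _ _ (Rabs_pos _) (Rabs_pos _) (HBf xi) Hv).
    pose proof (Rabs_pos (b - a)); nra. }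
  replace (h b - h a + 2 * (f a * g b - g a * f b)) with (phi b - phi a)
    by (unfold phi; ring).
  replace ((b - a) ^ 2) with (Rabs (b - a) * Rabs (b - a))
    by (rewrite <- Rabs_mult, Rabs_pos_eq by (apply Rle_0_sqr); ring).
  rewrite Hmvt, Rabs_mult, <- Rmult_assoc.
  apply Rmult_le_compat_r; [apply Rabs_pos|exact Hd].
Qed.

Lemma C1_H_pansu_conv (K : R -> Prop) (gamma : R -> Hpt) :
  compact K -> C1_H K gamma -> exists p, pansu_conv_coords K gamma p.
Proof.
  intros HK (f & g & h & Cf & Cg & Ch & Hhc & Hgamma).
  pose proof (horizontal_everywhere f g h Cf Cg Ch Hhc) as Hhor.
  destruct (compact_P1 K HK) as [m [M HmM]].
  exists (fun a => (Derive f a, Derive g a)); intros e He.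
  destruct (C1_taylor_uniform f m M Cf (e / 2)) as [df [Hdf Tf]]; [lra|].
  destruct (C1_taylor_uniform g m M Cg (e / 2)) as [dg [Hdg Tg]]; [lra|].
  destruct (area_quot_uniform f g h m M Cf Cg (proj1 Ch) Hhor (e / 2)) as [dh [Hdh Th]];
    [lra|].
  exists (Rmin df (Rmin dg dh)); split; [repeat apply Rmin_pos; lra|].
  intros a b Ka Kb [Hab0 Hab].
  pose proof (Rmin_l df (Rmin dg dh)); pose proof (Rmin_r df (Rmin dg dh));
  pose proof (Rmin_l dg dh); pose proof (Rmin_r dg dh).
  assert (Hba : b - a <> 0) by (intros E; rewrite E, Rabs_R0 in Hab0; lra).
  pose proof (HmM a Ka) as Ha; pose proof (HmM b Kb) as Hb.
  unfold slope, area_quot, X1, X2, X3; rewrite (Hgamma a Ka), (Hgamma b Kb); cbn [fst snd].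
  repeat split.
  - replace ((f b - f a) / (b - a) - Derive f a)
      with ((f b - f a - Derive f a * (b - a)) / (b - a)) by (field; exact Hba).
    eapply Rle_lt_trans; [apply Rabs_div_le; [exact Hba|apply Tf; auto; lra]|lra].
  - replace ((g b - g a) / (b - a) - Derive g a)
      with ((g b - g a - Derive g a * (b - a)) / (b - a)) by (field; exact Hba).
    eapply Rle_lt_trans; [apply Rabs_div_le; [exact Hba|apply Tg; auto; lra]|lra].
  - assert (Hsq : (b - a) ^ 2 <> 0) by (apply pow_nonzero; exact Hba).
    apply Rle_lt_trans with (e / 2); [apply Rabs_div_le; [exact Hsq|]|lra].
    rewrite (Rabs_pos_eq ((b - a) ^ 2)) by apply pow2_ge_0; apply Th; auto; lra.
Qed.

(** * Compact subsets of the line *)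

Lemma closed_sup_mem (S : R -> Prop) :
  (forall x, ~ S x -> exists r, 0 < r /\ forall y, Rabs (y - x) < r -> ~ S y) ->
  bound S -> (exists x, S x) -> exists m, S m /\ forall k, S k -> k <= m.
Proof.
  intros Hclosed Hb Hne.
  destruct (completeness S Hb Hne) as [m [Hub Hlub]].
  exists m; split; [|exact Hub].
  apply NNPP; intros Hm; destruct (Hclosed m Hm) as [r [Hr Hball]].
  assert (Hub' : is_upper_bound S (m - r / 2)).
  { intros x Sx; destruct (Rle_or_lt x (m - r / 2)) as [|Hx]; [assumption|exfalso].
    apply (Hball x); [|exact Sx]; pose proof (Hub x Sx); apply Rabs_def1; lra. }
  pose proof (Hlub _ Hub'); lra.
Qed.

Lemma compact_complement_ball (K : R -> Prop) : compact K ->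
  forall x, ~ K x -> exists r, 0 < r /\ forall y, Rabs (y - x) < r -> ~ K y.
Proof.
  intros HK x Hx; destruct (compact_P2 K HK x Hx) as [r Hr].
  exists r; split; [apply cond_pos|]; intros y Hy; apply Hr, Hy.
Qed.

Lemma compact_last_le (K : R -> Prop) (t : R) : compact K -> (exists k, K k /\ k <= t) ->
  exists c, K c /\ c <= t /\ forall k, K k -> k <= t -> k <= c.
Proof.
  intros HK Hne.
  destruct (closed_sup_mem (fun k => K k /\ k <= t)) as [c [[Kc Hct] Hmax]].
  - intros x Hx; destruct (classic (K x)) as [Kx|Kx].
    + exists (x - t); split; [destruct (Rle_or_lt x t); [tauto|lra]|].
      intros y Hy [_ Hyt]; apply Rabs_def2 in Hy; lra.
    + destruct (compact_complement_ball K HK x Kx) as [r [Hr Hball]].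
      exists r; split; [exact Hr|]; intros y Hy [Ky _]; exact (Hball y Hy Ky).
  - exists t; intros x [_ Hx]; exact Hx.
  - exact Hne.
  - exists c; repeat split; auto.
Qed.

Lemma compact_first_ge (K : R -> Prop) (t : R) : compact K -> (exists k, K k /\ t <= k) ->
  exists d, K d /\ t <= d /\ forall k, K k -> t <= k -> d <= k.
Proof.
  intros HK [k0 [Kk0 Hk0]].
  destruct (closed_sup_mem (fun y => K (- y) /\ t <= - y)) as [m [[Km Hmt] Hmax]].
  - intros x Hx; destruct (classic (K (- x))) as [Kx|Kx].
    + exists (t + x); split; [destruct (Rle_or_lt t (- x)); [tauto|lra]|].
      intros y Hy [_ Hyt]; apply Rabs_def2 in Hy; lra.
    + destruct (compact_complement_ball K HK (- x) Kx) as [r [Hr Hball]].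
      exists r; split; [exact Hr|]; intros y Hy [Ky _]; apply (Hball (- y)); [|exact Ky].
      replace (- y - - x) with (- (y - x)) by ring; rewrite Rabs_Ropp; exact Hy.
  - exists (- t); intros x [_ Hx]; lra.
  - exists (- k0); rewrite Ropp_involutive; auto.
  - exists (- m); repeat split; auto.
    intros k Kk Hk; assert (- k <= m) by (apply Hmax; rewrite Ropp_involutive; auto); lra.
Qed.

Definition last_le (K : R -> Prop) (t : R) : R :=
  epsilon (inhabits 0) (fun c => K c /\ c <= t /\ forall k, K k -> k <= t -> k <= c).
Definition first_ge (K : R -> Prop) (t : R) : R :=
  epsilon (inhabits 0) (fun d => K d /\ t <= d /\ forall k, K k -> t <= k -> d <= k).
Definition Kmin (K : R -> Prop) : R :=
  epsilon (inhabits 0) (fun m => K m /\ forall k, K k -> m <= k).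
Definition Kmax (K : R -> Prop) : R :=
  epsilon (inhabits 0) (fun m => K m /\ forall k, K k -> k <= m).

Lemma last_le_spec (K : R -> Prop) (t : R) : compact K -> (exists k, K k /\ k <= t) ->
  K (last_le K t) /\ last_le K t <= t /\ forall k, K k -> k <= t -> k <= last_le K t.
Proof. intros HK Hne; unfold last_le; apply epsilon_spec, compact_last_le; assumption. Qed.

Lemma first_ge_spec (K : R -> Prop) (t : R) : compact K -> (exists k, K k /\ t <= k) ->
  K (first_ge K t) /\ t <= first_ge K t /\ forall k, K k -> t <= k -> first_ge K t <= k.
Proof. intros HK Hne; unfold first_ge; apply epsilon_spec, compact_first_ge; assumption. Qed.

Lemma Kmin_spec (K : R -> Prop) : compact K -> (exists k, K k) ->
  K (Kmin K) /\ forall k, K k -> Kmin K <= k.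
Proof.
  intros HK [k0 Kk0]; unfold Kmin, Kmax; apply epsilon_spec.
  destruct (compact_P1 K HK) as [m [M Hb]].
  destruct (compact_first_ge K m HK) as [d [Kd [_ Hd]]];
    [exists k0; split; [exact Kk0|apply Hb, Kk0]|].
  exists d; split; [exact Kd|]; intros k Kk; apply Hd, Hb; exact Kk.
Qed.

Lemma Kmax_spec (K : R -> Prop) : compact K -> (exists k, K k) ->
  K (Kmax K) /\ forall k, K k -> k <= Kmax K.
Proof.
  intros HK [k0 Kk0]; unfold Kmin, Kmax; apply epsilon_spec.
  destruct (compact_P1 K HK) as [m [M Hb]].
  destruct (compact_last_le K M HK) as [c [Kc [_ Hc]]];
    [exists k0; split; [exact Kk0|apply Hb, Kk0]|].
  exists c; split; [exact Kc|]; intros k Kk; apply Hc, Hb; exact Kk.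
Qed.

Definition gap (K : R -> Prop) (c d : R) : Prop :=
  K c /\ K d /\ c < d /\ forall s, c < s < d -> ~ K s.

Lemma gap_of_point (K : R -> Prop) (t : R) : compact K -> ~ K t ->
  (exists k, K k /\ k < t) -> (exists k, K k /\ t < k) ->
  gap K (last_le K t) (first_ge K t) /\ last_le K t < t < first_ge K t.
Proof.
  intros HK Kt [k1 [Kk1 H1]] [k2 [Kk2 H2]].
  destruct (last_le_spec K t HK) as [Kc [Hct Hc]]; [exists k1; split; [auto|lra]|].
  destruct (first_ge_spec K t HK) as [Kd [Htd Hd]]; [exists k2; split; [auto|lra]|].
  assert (last_le K t <> t) by (intros E; rewrite E in Kc; contradiction).
  assert (first_ge K t <> t) by (intros E; rewrite E in Kd; contradiction).
  repeat split; auto; try lra.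
  intros s Hs Ks; destruct (Rle_or_lt s t) as [Hst|Hst].
  - pose proof (Hc s Ks Hst); lra.
  - pose proof (Hd s Ks ltac:(lra)); lra.
Qed.

Lemma gap_last_first (K : R -> Prop) (c d t : R) : compact K -> gap K c d -> c < t < d ->
  last_le K t = c /\ first_ge K t = d.
Proof.
  intros HK [Kc [Kd [Hcd Hno]]] Ht.
  destruct (last_le_spec K t HK) as [K1 [H1 H1']]; [exists c; split; [auto|lra]|].
  destruct (first_ge_spec K t HK) as [K2 [H2 H2']]; [exists d; split; [auto|lra]|].
  assert (c <= last_le K t) by (apply H1'; auto; lra).
  assert (first_ge K t <= d) by (apply H2'; auto; lra).
  assert (~ K t) by (apply Hno; exact Ht).
  assert (last_le K t <> t) by (intros E; rewrite E in K1; contradiction).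
  assert (first_ge K t <> t) by (intros E; rewrite E in K2; contradiction).
  split.
  - destruct (Req_dec (last_le K t) c) as [|Hne]; [assumption|exfalso].
    apply (Hno (last_le K t)); [lra|exact K1].
  - destruct (Req_dec (first_ge K t) d) as [|Hne]; [assumption|exfalso].
    apply (Hno (first_ge K t)); [lra|exact K2].
Qed.

(** * Gluing C^1 pieces across the gaps of a compact set *)

Lemma increment_by_MVT (Psi dPsi E D : R -> R) (k b l e : R) :
  (forall s, is_derive Psi s (dPsi s)) ->
  (forall s, Rmin k b <= s <= Rmax k b -> E s = Psi s /\ D s = dPsi s) ->
  (forall s, Rmin k b <= s <= Rmax k b -> Rabs (D s - l) <= e) ->
  Rabs (E b - E k - l * (b - k)) <= e * Rabs (b - k).
Proof.
  intros Hder Hagree Hclose.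
  destruct (MVT_between Psi dPsi k b Hder) as [xi [Hxi Hmvt]].
  assert (Hkb : forall s, s = k \/ s = b -> Rmin k b <= s <= Rmax k b)
    by (intros s [-> | ->]; split; auto using Rmin_l, Rmin_r, Rmax_l, Rmax_r).
  rewrite (proj1 (Hagree b (Hkb b (or_intror eq_refl)))),
    (proj1 (Hagree k (Hkb k (or_introl eq_refl)))), Hmvt.
  replace (dPsi xi * (b - k) - l * (b - k)) with ((dPsi xi - l) * (b - k)) by ring.
  rewrite Rabs_mult, <- (proj2 (Hagree xi Hxi)).
  apply Rmult_le_compat_r; [apply Rabs_pos|apply Hclose, Hxi].
Qed.

(* [(c, d)] is the component of the complement of [K] containing [t]: on it, and at
   its ends lying in [K], [E] and [D] agree with a C^1 function and its derivative. *)
Definition C1_on_component (K : R -> Prop) (E D : R -> R) (t : R) : Prop :=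
  exists c d (Psi dPsi : R -> R),
    c < t < d /\ (forall s, c < s < d -> ~ K s) /\
    (forall s, c <= s <= d -> c < s < d \/ K s -> E s = Psi s /\ D s = dPsi s) /\
    (forall s, is_derive Psi s (dPsi s)) /\ (forall s, continuity_pt dPsi s) /\
    ((exists k, K k /\ k < t) -> K c) /\ ((exists k, K k /\ t < k) -> K d).

Definition C1_on_gaps (K : R -> Prop) (E D : R -> R) : Prop :=
  forall t, ~ K t -> C1_on_component K E D t.

Definition whitney_diff (K : R -> Prop) (E D : R -> R) : Prop :=
  forall a, K a -> forall e, 0 < e -> exists d, 0 < d /\ forall b, K b -> Rabs (b - a) < d ->
    Rabs (E b - E a - D a * (b - a)) <= e * Rabs (b - a).

Definition continuous_within (K : R -> Prop) (D : R -> R) : Prop :=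
  forall a, K a -> forall e, 0 < e -> exists d, 0 < d /\ forall b, K b -> Rabs (b - a) < d ->
    Rabs (D b - D a) < e.

Definition small_gap_oscillation (K : R -> Prop) (D : R -> R) : Prop :=
  forall e, 0 < e -> exists eta, 0 < eta /\ forall c d t, gap K c d -> c < t < d ->
    d - c < eta -> Rabs (D t - D c) < e /\ Rabs (D t - D d) < e.

Section Gluing.

Variables (K : R -> Prop) (E D : R -> R).
Hypothesis Hgaps : C1_on_gaps K E D.

Lemma C1_on_gaps_off_K (t : R) : ~ K t -> is_derive E t (D t) /\ continuity_pt D t.
Proof.
  intros Kt; destruct (Hgaps t Kt) as (c & d & Psi & dPsi & Hcd & _ & Hagree & Hder & Hc & _).
  set (r := Rmin (t - c) (d - t)).
  assert (Hr : 0 < r) by (apply Rmin_pos; lra).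
  assert (r <= t - c) by apply Rmin_l; assert (r <= d - t) by apply Rmin_r.
  assert (Hnear : forall s, Rabs (s - t) < r -> E s = Psi s /\ D s = dPsi s).
  { intros s Hs; apply Rabs_def2 in Hs; apply Hagree; [lra|left; lra]. }
  assert (Ht : Rabs (t - t) < r) by (rewrite Rminus_eq_0, Rabs_R0; exact Hr).
  split.
  - rewrite (proj2 (Hnear t Ht)).
    apply is_derive_ext_loc with Psi; [|apply Hder].
    exists (mkposreal r Hr); intros s Hs; symmetry; apply Hnear, Hs.
  - apply continuity_pt_eps; intros e He.
    destruct (proj1 (continuity_pt_eps dPsi t) (Hc t) e He) as [d0 [Hd0 Hpsi]].
    exists (Rmin d0 r); split; [apply Rmin_pos; lra|]; intros s Hs.
    pose proof (Rmin_l d0 r); pose proof (Rmin_r d0 r).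
    rewrite (proj2 (Hnear s ltac:(lra))), (proj2 (Hnear t Ht)); apply Hpsi; lra.
Qed.

(* For [b] outside [K], the end [k] of its gap facing [a] splits the increment into a
   part controlled by the MVT on the gap and a part controlled on [K]. *)
Lemma whitney_derive : whitney_diff K E D -> (forall a, K a -> continuity_pt D a) ->
  forall t, is_derive E t (D t).
Proof.
  intros Hdiff Hcont a.
  destruct (classic (K a)) as [Ka|Ka]; [|apply (C1_on_gaps_off_K a Ka)].
  apply is_derive_of_taylor; intros e He.
  destruct (Hdiff a Ka e He) as [d1 [Hd1 HK]].
  destruct (proj1 (continuity_pt_eps D a) (Hcont a Ka) e He) as [d2 [Hd2 HD]].
  exists (Rmin d1 d2); split; [apply Rmin_pos; lra|]; intros b Hb.
  pose proof (Rmin_l d1 d2); pose proof (Rmin_r d1 d2).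
  destruct (classic (K b)) as [Kb|Kb]; [apply HK; auto; lra|].
  destruct (Hgaps b Kb) as (c & d & Psi & dPsi & Hcd & Hfree & Hagree & Hder & _ & HKc & HKd).
  assert (Hk : exists k, K k /\ Rmin a b <= k <= Rmax a b /\
    forall s, Rmin k b <= s <= Rmax k b -> E s = Psi s /\ D s = dPsi s).
  { destruct (Rlt_or_le a b) as [Hab|Hab].
    - assert (Kc : K c) by (apply HKc; exists a; auto).
      assert (a <= c) by (destruct (Rle_or_lt a c); [auto|exfalso; apply (Hfree a); auto; lra]).
      exists c; split; [exact Kc|split]; [unfold Rmin, Rmax; destruct (Rle_dec a b); lra|].
      intros s Hs; unfold Rmin, Rmax in Hs; destruct (Rle_dec c b); [|lra].
      apply Hagree; [lra|].
      destruct (Req_dec s c) as [->|]; [right; exact Kc|left; lra].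
    - assert (Hba : b < a) by (destruct (Req_dec a b) as [<-|]; [contradiction|lra]).
      assert (Kd : K d) by (apply HKd; exists a; auto).
      assert (d <= a) by (destruct (Rle_or_lt d a); [auto|exfalso; apply (Hfree a); auto; lra]).
      exists d; split; [exact Kd|split]; [unfold Rmin, Rmax; destruct (Rle_dec a b); lra|].
      intros s Hs; unfold Rmin, Rmax in Hs; destruct (Rle_dec d b); [lra|].
      apply Hagree; [lra|].
      destruct (Req_dec s d) as [->|]; [right; exact Kd|left; lra]. }
  destruct Hk as (k & Kk & Hkab & Hagk).
  pose proof (between_split a b k Hkab) as Hsplit.
  pose proof (between_dist a b k Hkab).
  assert (Hgap : Rabs (E b - E k - D a * (b - k)) <= e * Rabs (b - k)).
  { apply (increment_by_MVT Psi dPsi E D); auto.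
    intros s Hs; left; apply HD.
    pose proof (between_dist a b s (between_in _ _ k b s Hkab
      (conj (Rmin_r a b) (Rmax_r a b)) Hs)); lra. }
  assert (HonK : Rabs (E k - E a - D a * (k - a)) <= e * Rabs (k - a)) by (apply HK; auto; lra).
  replace (E b - E a - D a * (b - a))
    with ((E b - E k - D a * (b - k)) + (E k - E a - D a * (k - a))) by ring.
  eapply Rle_trans; [apply Rabs_triang|]; rewrite <- Hsplit; lra.
Qed.

Hypothesis HK : compact K.
Hypothesis Hcont : continuous_within K D.
Hypothesis Hosc : small_gap_oscillation K D.

(* Either [K] accumulates at [a] from the right, and then the gaps near [a] are short,
   or a whole gap starts at [a]. *)
Lemma gap_continuity_right (a : R) : K a -> forall e, 0 < e ->
  exists del, 0 < del /\ forall t, a < t < a + del -> Rabs (D t - D a) < e.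
Proof.
  intros Ka e He.
  destruct (Hcont a Ka (e / 2)) as [d1 [Hd1 H1]]; [lra|].
  destruct (Hosc (e / 2)) as [eta [Heta H2]]; [lra|].
  set (r := Rmin d1 eta).
  assert (Hr : 0 < r) by (apply Rmin_pos; lra).
  assert (r <= d1) by apply Rmin_l; assert (r <= eta) by apply Rmin_r.
  destruct (classic (exists k, K k /\ a < k < a + r)) as [[k [Kk Hk]]|Hno].
  - exists (k - a); split; [lra|]; intros t Ht.
    destruct (classic (K t)) as [Kt|Kt].
    { apply Rlt_trans with (e / 2); [apply H1; auto; apply Rabs_def1|]; lra. }
    assert (Hl : exists k', K k' /\ k' < t) by (exists a; split; [exact Ka|lra]).
    assert (Hr' : exists k', K k' /\ t < k') by (exists k; split; [exact Kk|lra]).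
    destruct (gap_of_point K t HK Kt Hl Hr') as [Hgap Hct].
    destruct Hgap as (Kc & Kd & Hcd & Hfree).
    set (c := last_le K t) in *; set (d := first_ge K t) in *.
    assert (a <= c) by (destruct (Rle_or_lt a c); [auto|exfalso; apply (Hfree a); auto; lra]).
    assert (d <= k) by (destruct (Rle_or_lt d k); [auto|exfalso; apply (Hfree k); auto; lra]).
    destruct (H2 c d t (conj Kc (conj Kd (conj Hcd Hfree))) Hct ltac:(lra)) as [Hc _].
    assert (Rabs (D c - D a) < e / 2) by (apply H1; auto; apply Rabs_def1; lra).
    replace (D t - D a) with ((D t - D c) + (D c - D a)) by ring.
    eapply Rle_lt_trans; [apply Rabs_triang|lra].
  - assert (Kt0 : ~ K (a + r / 2)) by (intros Kt0; apply Hno; exists (a + r / 2); split; auto; lra).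
    destruct (Hgaps _ Kt0) as (c & d & Psi & dPsi & Hcd & Hfree & Hagree & _ & Hc & HKc & _).
    assert (Kc : K c) by (apply HKc; exists a; split; auto; lra).
    assert (c = a).
    { destruct (Rle_or_lt c a); [destruct (Rle_or_lt a c)|]; [lra| |].
      - exfalso; apply (Hfree a); auto; lra.
      - exfalso; apply Hno; exists c; split; auto; lra. }
    subst c.
    destruct (proj1 (continuity_pt_eps dPsi a) (Hc a) e He) as [d3 [Hd3 H3]].
    exists (Rmin d3 (d - a)); split; [apply Rmin_pos; lra|]; intros t Ht.
    pose proof (Rmin_l d3 (d - a)); pose proof (Rmin_r d3 (d - a)).
    assert (Hat : a <= t <= d) by lra; assert (Haa : a <= a <= d) by lra.
    assert (Ht' : a < t < d) by lra.
    rewrite (proj2 (Hagree t Hat (or_introl Ht'))), (proj2 (Hagree a Haa (or_intror Ka))).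
    apply H3, Rabs_def1; lra.
Qed.

Lemma gap_continuity_left (a : R) : K a -> forall e, 0 < e ->
  exists del, 0 < del /\ forall t, a - del < t < a -> Rabs (D t - D a) < e.
Proof.
  intros Ka e He.
  destruct (Hcont a Ka (e / 2)) as [d1 [Hd1 H1]]; [lra|].
  destruct (Hosc (e / 2)) as [eta [Heta H2]]; [lra|].
  set (r := Rmin d1 eta).
  assert (Hr : 0 < r) by (apply Rmin_pos; lra).
  assert (r <= d1) by apply Rmin_l; assert (r <= eta) by apply Rmin_r.
  destruct (classic (exists k, K k /\ a - r < k < a)) as [[k [Kk Hk]]|Hno].
  - exists (a - k); split; [lra|]; intros t Ht.
    destruct (classic (K t)) as [Kt|Kt].
    { apply Rlt_trans with (e / 2); [apply H1; auto; apply Rabs_def1|]; lra. }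
    assert (Hl : exists k', K k' /\ k' < t) by (exists k; split; [exact Kk|lra]).
    assert (Hr' : exists k', K k' /\ t < k') by (exists a; split; [exact Ka|lra]).
    destruct (gap_of_point K t HK Kt Hl Hr') as [Hgap Hct].
    destruct Hgap as (Kc & Kd & Hcd & Hfree).
    set (c := last_le K t) in *; set (d := first_ge K t) in *.
    assert (d <= a) by (destruct (Rle_or_lt d a); [auto|exfalso; apply (Hfree a); auto; lra]).
    assert (k <= c) by (destruct (Rle_or_lt k c); [auto|exfalso; apply (Hfree k); auto; lra]).
    destruct (H2 c d t (conj Kc (conj Kd (conj Hcd Hfree))) Hct ltac:(lra)) as [_ Hd].
    assert (Rabs (D d - D a) < e / 2) by (apply H1; auto; apply Rabs_def1; lra).
    replace (D t - D a) with ((D t - D d) + (D d - D a)) by ring.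
    eapply Rle_lt_trans; [apply Rabs_triang|lra].
  - assert (Kt0 : ~ K (a - r / 2)) by (intros Kt0; apply Hno; exists (a - r / 2); split; auto; lra).
    destruct (Hgaps _ Kt0) as (c & d & Psi & dPsi & Hcd & Hfree & Hagree & _ & Hc & _ & HKd).
    assert (Kd : K d) by (apply HKd; exists a; split; auto; lra).
    assert (d = a).
    { destruct (Rle_or_lt d a); [destruct (Rle_or_lt a d)|]; [lra| |].
      - exfalso; apply Hno; exists d; split; auto; lra.
      - exfalso; apply (Hfree a); auto; lra. }
    subst d.
    destruct (proj1 (continuity_pt_eps dPsi a) (Hc a) e He) as [d3 [Hd3 H3]].
    exists (Rmin d3 (a - c)); split; [apply Rmin_pos; lra|]; intros t Ht.
    pose proof (Rmin_l d3 (a - c)); pose proof (Rmin_r d3 (a - c)).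
    assert (Hat : c <= t <= a) by lra; assert (Haa : c <= a <= a) by lra.
    assert (Ht' : c < t < a) by lra.
    rewrite (proj2 (Hagree t Hat (or_introl Ht'))), (proj2 (Hagree a Haa (or_intror Ka))).
    apply H3, Rabs_def1; lra.
Qed.

Lemma whitney_continuous (t : R) : continuity_pt D t.
Proof.
  destruct (classic (K t)) as [Ka|Ka]; [|apply (C1_on_gaps_off_K t Ka)].
  apply continuity_pt_eps; intros e He.
  destruct (gap_continuity_right t Ka e He) as [d1 [Hd1 H1]].
  destruct (gap_continuity_left t Ka e He) as [d2 [Hd2 H2]].
  exists (Rmin d1 d2); split; [apply Rmin_pos; lra|]; intros s Hs.
  pose proof (Rmin_l d1 d2); pose proof (Rmin_r d1 d2); apply Rabs_def2 in Hs.
  destruct (Rtotal_order s t) as [Hlt|[->|Hgt]].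
  - apply H2; lra.
  - rewrite Rminus_eq_0, Rabs_R0; exact He.
  - apply H1; lra.
Qed.

End Gluing.

Definition glue (K : R -> Prop) (onK : R -> R) (line : R -> R -> R)
    (fill : R -> R -> R -> R) (t : R) : R :=
  if excluded_middle_informative (K t) then onK t
  else if Rlt_dec t (Kmin K) then line (Kmin K) t
  else if Rlt_dec (Kmax K) t then line (Kmax K) t
  else fill (last_le K t) (first_ge K t) t.

Section Glue.

Variable K : R -> Prop.
Hypothesis HK : compact K.
Hypothesis Hne : exists k, K k.

Lemma glue_in (onK : R -> R) (line : R -> R -> R) (fill : R -> R -> R -> R) (t : R) :
  K t -> glue K onK line fill t = onK t.
Proof. intros Kt; unfold glue; destruct (excluded_middle_informative (K t)); tauto. Qed.

Lemma glue_below (onK : R -> R) (line : R -> R -> R) (fill : R -> R -> R -> R) (t : R) :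
  t < Kmin K -> glue K onK line fill t = line (Kmin K) t.
Proof.
  intros Ht; destruct (Kmin_spec K HK Hne) as [_ Hmin]; unfold glue.
  destruct (excluded_middle_informative (K t)) as [Kt|_]; [pose proof (Hmin t Kt); lra|].
  destruct (Rlt_dec t (Kmin K)); [reflexivity|lra].
Qed.

Lemma glue_above (onK : R -> R) (line : R -> R -> R) (fill : R -> R -> R -> R) (t : R) :
  Kmax K < t -> glue K onK line fill t = line (Kmax K) t.
Proof.
  intros Ht; destruct (Kmin_spec K HK Hne) as [Kmn _]; destruct (Kmax_spec K HK Hne) as [_ Hmax].
  pose proof (Hmax _ Kmn); unfold glue.
  destruct (excluded_middle_informative (K t)) as [Kt|_]; [pose proof (Hmax t Kt); lra|].
  destruct (Rlt_dec t (Kmin K)); [lra|].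
  destruct (Rlt_dec (Kmax K) t); [reflexivity|lra].
Qed.

Lemma glue_gap (onK : R -> R) (line : R -> R -> R) (fill : R -> R -> R -> R) (c d t : R) :
  gap K c d -> c < t < d -> glue K onK line fill t = fill c d t.
Proof.
  intros Hgap Ht; pose proof Hgap as (Kc & Kd & _ & Hfree).
  destruct (Kmin_spec K HK Hne) as [_ Hmin]; destruct (Kmax_spec K HK Hne) as [_ Hmax].
  pose proof (Hmin c Kc); pose proof (Hmax d Kd).
  destruct (gap_last_first K c d t HK Hgap Ht) as [Ec Ed]; unfold glue.
  destruct (excluded_middle_informative (K t)) as [Kt|_]; [contradiction (Hfree t Ht Kt)|].
  destruct (Rlt_dec t (Kmin K)); [lra|]; destruct (Rlt_dec (Kmax K) t); [lra|].
  rewrite Ec, Ed; reflexivity.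
Qed.

Variables (xK dK : R -> R) (lE lD : R -> R -> R) (gE gD : R -> R -> R -> R).
Hypothesis Hline : forall a, K a -> (forall t, is_derive (lE a) t (lD a t)) /\
  (forall t, continuity_pt (lD a) t) /\ lE a a = xK a /\ lD a a = dK a.
Hypothesis Hfill : forall c d, gap K c d -> (forall t, is_derive (gE c d) t (gD c d t)) /\
  (forall t, continuity_pt (gD c d) t) /\
  gE c d c = xK c /\ gE c d d = xK d /\ gD c d c = dK c /\ gD c d d = dK d.

Lemma glue_C1_below (t : R) : t < Kmin K ->
  C1_on_component K (glue K xK lE gE) (glue K dK lD gD) t.
Proof.
  intros Hlo; destruct (Kmin_spec K HK Hne) as [Kmn Hmin].
  destruct (Hline _ Kmn) as (Hd & Hc & E0 & D0).
  exists (t - 1), (Kmin K), (lE (Kmin K)), (lD (Kmin K)).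
  refine (conj _ (conj _ (conj _ (conj Hd (conj Hc (conj _ (fun _ => Kmn))))))); [lra| | |].
  - intros s Hs Ks; pose proof (Hmin s Ks); lra.
  - intros s Hs _; destruct (Rlt_or_le s (Kmin K)).
    + rewrite !glue_below; auto.
    + replace s with (Kmin K) by lra; rewrite !glue_in; auto.
  - intros [k [Kk Hk]]; pose proof (Hmin k Kk); lra.
Qed.

Lemma glue_C1_above (t : R) : Kmax K < t ->
  C1_on_component K (glue K xK lE gE) (glue K dK lD gD) t.
Proof.
  intros Hhi; destruct (Kmax_spec K HK Hne) as [Kmx Hmax].
  destruct (Hline _ Kmx) as (Hd & Hc & E0 & D0).
  exists (Kmax K), (t + 1), (lE (Kmax K)), (lD (Kmax K)).
  refine (conj _ (conj _ (conj _ (conj Hd (conj Hc (conj (fun _ => Kmx) _)))))); [lra| | |].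
  - intros s Hs Ks; pose proof (Hmax s Ks); lra.
  - intros s Hs _; destruct (Rlt_or_le (Kmax K) s).
    + rewrite !glue_above; auto.
    + replace s with (Kmax K) by lra; rewrite !glue_in; auto.
  - intros [k [Kk Hk]]; pose proof (Hmax k Kk); lra.
Qed.

Lemma glue_C1_between (t : R) : ~ K t -> Kmin K <= t <= Kmax K ->
  C1_on_component K (glue K xK lE gE) (glue K dK lD gD) t.
Proof.
  intros Kt Ht; destruct (Kmin_spec K HK Hne) as [Kmn _]; destruct (Kmax_spec K HK Hne) as [Kmx _].
  assert (Hl : exists k, K k /\ k < t)
    by (exists (Kmin K); split; [auto|destruct (Req_dec (Kmin K) t) as [E|]];
        [rewrite E in Kmn; contradiction|lra]).
  assert (Hr : exists k, K k /\ t < k)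
    by (exists (Kmax K); split; [auto|destruct (Req_dec (Kmax K) t) as [E|]];
        [rewrite E in Kmx; contradiction|lra]).
  destruct (gap_of_point K t HK Kt Hl Hr) as [Hgap Hcd].
  set (c := last_le K t) in *; set (d := first_ge K t) in *.
  pose proof Hgap as (Kc & Kd & _ & Hfree).
  destruct (Hfill c d Hgap) as (Hd & Hc & Ec & Ed & Dc & Dd).
  exists c, d, (gE c d), (gD c d).
  refine (conj Hcd (conj Hfree (conj _ (conj Hd (conj Hc (conj (fun _ => Kc) (fun _ => Kd))))))).
  intros s Hs [Hin|Ks]; [rewrite !glue_gap with (c := c) (d := d); auto|].
  destruct (Req_dec s c) as [->|]; [rewrite !glue_in; auto|].
  replace s with d by (destruct (Req_dec s d); [auto|exfalso; apply (Hfree s); [lra|auto]]).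
  rewrite !glue_in; auto.
Qed.

Lemma glue_C1_on_gaps : C1_on_gaps K (glue K xK lE gE) (glue K dK lD gD).
Proof.
  intros t Kt.
  destruct (Rlt_or_le t (Kmin K)) as [Hlo|Hlo]; [apply glue_C1_below, Hlo|].
  destruct (Rlt_or_le (Kmax K) t) as [Hhi|Hhi]; [apply glue_C1_above, Hhi|].
  apply glue_C1_between; auto.
Qed.

End Glue.

(** * Filling a gap: polynomial profiles on [0, 1] *)

Definition sgn (x : R) : R := if Rle_dec 0 x then 1 else -1.

Lemma sgn_cases (x : R) : (sgn x = 1 \/ sgn x = -1) /\ sgn x * Rabs x = x.
Proof.
  unfold sgn; destruct (Rle_dec 0 x).
  - rewrite Rabs_pos_eq by lra; lra.
  - rewrite Rabs_left by lra; lra.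
Qed.

Definition pos_root (k b c : R) : R := (- b + sqrt (b ^ 2 + 4 * k * c)) / (2 * k).

Lemma pos_root_spec (k b c : R) : 0 < k -> 0 <= c ->
  k * pos_root k b c ^ 2 + b * pos_root k b c = c.
Proof.
  intros Hk Hc; unfold pos_root.
  assert (Hsq : sqrt (b ^ 2 + 4 * k * c) ^ 2 = b ^ 2 + 4 * k * c)
    by (rewrite <- Rsqr_pow2; apply Rsqr_sqrt; nra).
  field_simplify; [rewrite Hsq; field|]; lra.
Qed.

Lemma sqrt_add_le (a b : R) : 0 <= a -> 0 <= b -> sqrt (a + b) <= sqrt a + sqrt b.
Proof.
  intros Ha Hb.
  pose proof (sqrt_pos a); pose proof (sqrt_pos b).
  apply Rsqr_incr_0_var; [|lra].
  unfold Rsqr; rewrite sqrt_sqrt by lra.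
  replace ((sqrt a + sqrt b) * (sqrt a + sqrt b))
    with (sqrt a * sqrt a + sqrt b * sqrt b + 2 * sqrt a * sqrt b) by ring.
  rewrite !sqrt_sqrt by lra; nra.
Qed.

Lemma pos_root_small (k b c e : R) : 0 < k -> 0 <= c ->
  Rabs b < k * e / 2 -> c < k * e ^ 2 / 4 -> Rabs (pos_root k b c) < e.
Proof.
  intros Hk Hc Hb Hce.
  assert (He : 0 < e) by (pose proof (Rabs_pos b); nra).
  assert (Hsq : sqrt (b ^ 2 + 4 * k * c) <= Rabs b + sqrt (4 * k * c)).
  { rewrite <- sqrt_Rsqr_abs, Rsqr_pow2; apply sqrt_add_le; nra. }
  assert (Hs : sqrt (4 * k * c) < k * e).
  { rewrite <- (sqrt_pow2 (k * e)) by nra; apply sqrt_lt_1_alt; nra. }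
  unfold pos_root; rewrite Rabs_div by lra; rewrite (Rabs_pos_eq (2 * k)) by lra.
  apply Rlt_div_l; [lra|].
  eapply Rle_lt_trans; [apply Rabs_triang|].
  rewrite Rabs_Ropp, (Rabs_pos_eq (sqrt _)) by apply sqrt_pos; lra.
Qed.

(* [h0] and [h1] vanish at 0 and 1 with derivatives [(1, 0)] and [(0, 1)] there, [bump1]
   and [bump2] vanish with their derivatives at 0 and 1, and all four have mean zero.
   The [d] and [I] versions are the derivatives and the primitives vanishing at 0. *)
Definition h0 (s : R) : R := s - 9/2 * s^2 + 6 * s^3 - 5/2 * s^4.
Definition h1 (s : R) : R := 3/2 * s^2 - 4 * s^3 + 5/2 * s^4.
Definition bump1 (s : R) : R := -6 * s^2 + 40 * s^3 - 90 * s^4 + 84 * s^5 - 28 * s^6.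
Definition bump2 (s : R) : R := - s^2 + 4 * s^3 - 5 * s^4 + 2 * s^5.

Definition dh0 (s : R) : R := 1 - 9 * s + 18 * s^2 - 10 * s^3.
Definition dh1 (s : R) : R := 3 * s - 12 * s^2 + 10 * s^3.
Definition dbump1 (s : R) : R := -12 * s + 120 * s^2 - 360 * s^3 + 420 * s^4 - 168 * s^5.
Definition dbump2 (s : R) : R := -2 * s + 12 * s^2 - 20 * s^3 + 10 * s^4.

Definition Ih0 (s : R) : R := 1/2 * s^2 - 3/2 * s^3 + 3/2 * s^4 - 1/2 * s^5.
Definition Ih1 (s : R) : R := 1/2 * s^3 - s^4 + 1/2 * s^5.
Definition Ibump1 (s : R) : R := -2 * s^3 + 10 * s^4 - 18 * s^5 + 14 * s^6 - 4 * s^7.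
Definition Ibump2 (s : R) : R := -1/3 * s^3 + s^4 - s^5 + 1/3 * s^6.

(* [W_u_v] is the primitive of [u' v - u v'] vanishing at 0. *)
Definition W_h0_h1 (s : R) : R :=
  -1/2 * s^3 + 2 * s^4 - 33/10 * s^5 + 5/2 * s^6 - 5/7 * s^7.
Definition W_h0_bump2 (s : R) : R :=
  1/3 * s^3 - 2 * s^4 + 27/5 * s^5 - 8 * s^6 + 47/7 * s^7 - 3 * s^8 + 5/9 * s^9.
Definition W_h1_bump2 (s : R) : R :=
  -2/5 * s^5 + 5/3 * s^6 - 19/7 * s^7 + 2 * s^8 - 5/9 * s^9.
Definition W_bump1_h0 (s : R) : R :=
  -2 * s^3 + 20 * s^4 - 414/5 * s^5 + 186 * s^6 - 1714/7 * s^7 + 189 * s^8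
  - 238/3 * s^9 + 14 * s^10.
Definition W_bump1_h1 (s : R) : R :=
  36/5 * s^5 - 40 * s^6 + 638/7 * s^7 - 105 * s^8 + 182/3 * s^9 - 14 * s^10.
Definition W_bump1_bump2 (s : R) : R :=
  -16/5 * s^5 + 20 * s^6 - 376/7 * s^7 + 78 * s^8 - 64 * s^9 + 28 * s^10 - 56/11 * s^11.

Ltac unfold_profiles :=
  unfold h0, h1, bump1, bump2, dh0, dh1, dbump1, dbump2, Ih0, Ih1, Ibump1, Ibump2,
    W_h0_h1, W_h0_bump2, W_h1_bump2, W_bump1_h0, W_bump1_h1, W_bump1_bump2.

Lemma pow_unit_interval (s : R) (k : nat) : 0 <= s <= 1 -> 0 <= s ^ k <= 1.
Proof.
  intros Hs; split; [apply pow_le; lra|].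
  induction k as [|k IH]; simpl; nra.
Qed.

(* Each bound is the sum of the absolute values of the coefficients. *)
Lemma profile_derivatives_bounded (s : R) : 0 <= s <= 1 ->
  Rabs (dh0 s) <= 1100 /\ Rabs (dh1 s) <= 1100 /\
  Rabs (dbump1 s) <= 1100 /\ Rabs (dbump2 s) <= 1100.
Proof.
  intros Hs.
  pose proof (pow_unit_interval s 2 Hs); pose proof (pow_unit_interval s 3 Hs);
  pose proof (pow_unit_interval s 4 Hs); pose proof (pow_unit_interval s 5 Hs).
  unfold dh0, dh1, dbump1, dbump2; repeat split; apply Rabs_le; lra.
Qed.

(* A correction [Y] must have derivative [(gA1, gA2)] at 0 and [(gB1, gB2)] at 1 and
   sweep the area [gZ / 2]. *)
Record gap_data := GapData { gA1 : R; gA2 : R; gB1 : R; gB2 : R; gZ : R }.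

(* For [Y] below, twice the swept area is [x cross_coef - area_coef bump_sign x^2 -
   (gA1 gB2 - gB1 gA2) / 35] with [x = amplitude]; as [bump_sign = - sgn area_defect],
   equating it with [gZ] reads [area_coef x^2 - bump_sign cross_coef x = |area_defect|]. *)
Definition area_coef : R := 4/385.
Definition area_defect (q : gap_data) : R := gZ q + (gA1 q * gB2 q - gB1 q * gA2 q) / 35.
Definition bump_sign (q : gap_data) : R := - sgn (area_defect q).
Definition cross_coef (q : gap_data) : R :=
  2 * bump_sign q * (gA1 q - gB1 q) / 315 + 2 * (gA2 q + gB2 q) / 105.
Definition amplitude (q : gap_data) : R :=
  pos_root area_coef (- bump_sign q * cross_coef q) (Rabs (area_defect q)).

Definition Y1 (q : gap_data) (s : R) : R :=
  gA1 q * h0 s + gB1 q * h1 s + amplitude q * bump1 s.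
Definition Y2 (q : gap_data) (s : R) : R :=
  gA2 q * h0 s + gB2 q * h1 s + amplitude q * bump_sign q * bump2 s.
Definition dY1 (q : gap_data) (s : R) : R :=
  gA1 q * dh0 s + gB1 q * dh1 s + amplitude q * dbump1 s.
Definition dY2 (q : gap_data) (s : R) : R :=
  gA2 q * dh0 s + gB2 q * dh1 s + amplitude q * bump_sign q * dbump2 s.
Definition IY1 (q : gap_data) (s : R) : R :=
  gA1 q * Ih0 s + gB1 q * Ih1 s + amplitude q * Ibump1 s.
Definition IY2 (q : gap_data) (s : R) : R :=
  gA2 q * Ih0 s + gB2 q * Ih1 s + amplitude q * bump_sign q * Ibump2 s.
Definition WY (q : gap_data) (s : R) : R :=
  (gA1 q * gB2 q - gB1 q * gA2 q) * W_h0_h1 s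
  + amplitude q * bump_sign q * (gA1 q * W_h0_bump2 s + gB1 q * W_h1_bump2 s)
  + amplitude q * (gA2 q * W_bump1_h0 s + gB2 q * W_bump1_h1 s)
  + amplitude q ^ 2 * bump_sign q * W_bump1_bump2 s.

Definition prof1 (q : gap_data) (m1 s : R) : R := m1 * s + Y1 q s.
Definition prof2 (q : gap_data) (m2 s : R) : R := m2 * s + Y2 q s.
Definition prof_area (q : gap_data) (m1 m2 s : R) : R :=
  m1 * (2 * IY2 q s - s * Y2 q s) + m2 * (s * Y1 q s - 2 * IY1 q s) + WY q s.

Ltac unfold_gap_profile :=
  unfold prof_area, prof1, prof2, Y1, Y2, dY1, dY2, IY1, IY2, WY; unfold_profiles.

Lemma is_derive_prof1 (q : gap_data) (m1 s : R) :
  is_derive (prof1 q m1) s (m1 + dY1 q s).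
Proof. unfold_gap_profile; auto_derive; [auto|field]. Qed.

Lemma is_derive_prof2 (q : gap_data) (m2 s : R) :
  is_derive (prof2 q m2) s (m2 + dY2 q s).
Proof. unfold_gap_profile; auto_derive; [auto|field]. Qed.

Lemma is_derive_prof_area (q : gap_data) (m1 m2 s : R) :
  is_derive (prof_area q m1 m2) s
    ((m1 + dY1 q s) * prof2 q m2 s - prof1 q m1 s * (m2 + dY2 q s)).
Proof. unfold_gap_profile; auto_derive; [auto|field]. Qed.

Lemma ex_derive_dY1 (q : gap_data) (s : R) : ex_derive (dY1 q) s.
Proof. unfold dY1; unfold_profiles; auto_derive; auto. Qed.

Lemma ex_derive_dY2 (q : gap_data) (s : R) : ex_derive (dY2 q) s.
Proof. unfold dY2; unfold_profiles; auto_derive; auto. Qed.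

(* The profiles have zero mean, so the chord does not contribute to the area. *)
Lemma gap_profile_ends (q : gap_data) (m1 m2 : R) :
  prof1 q m1 0 = 0 /\ prof1 q m1 1 = m1 /\ prof2 q m2 0 = 0 /\ prof2 q m2 1 = m2 /\
  dY1 q 0 = gA1 q /\ dY1 q 1 = gB1 q /\ dY2 q 0 = gA2 q /\ dY2 q 1 = gB2 q /\
  prof_area q m1 m2 0 = 0 /\ prof_area q m1 m2 1 = WY q 1.
Proof. unfold_gap_profile; repeat split; simpl; field. Qed.

Lemma gap_profile_area (q : gap_data) (m1 m2 : R) : 2 * prof_area q m1 m2 1 = gZ q.
Proof.
  destruct (gap_profile_ends q m1 m2) as (_&_&_&_&_&_&_&_&_&->).
  pose proof (pos_root_spec area_coef (- bump_sign q * cross_coef q)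
    (Rabs (area_defect q)) ltac:(unfold area_coef; lra) (Rabs_pos _)) as Hroot.
  fold (amplitude q) in Hroot.
  destruct (sgn_cases (area_defect q)) as [Hs Habs].
  unfold WY, cross_coef, bump_sign, area_coef in *; unfold area_defect in *; unfold_profiles.
  simpl in *.
  destruct Hs as [Hs | Hs]; rewrite Hs in *; lra.
Qed.

Lemma bump_sign_abs (q : gap_data) : Rabs (bump_sign q) = 1.
Proof.
  unfold bump_sign; rewrite Rabs_Ropp.
  destruct (sgn_cases (area_defect q)) as [[-> | ->] _]; unfold Rabs;
    destruct Rcase_abs; lra.
Qed.

Lemma amplitude_small (e : R) : 0 < e -> exists eta, 0 < eta /\ forall q,
  Rabs (gA1 q) < eta -> Rabs (gA2 q) < eta -> Rabs (gB1 q) < eta -> Rabs (gB2 q) < eta ->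
  Rabs (gZ q) < eta -> Rabs (amplitude q) < e.
Proof.
  intros He.
  assert (Hk : 0 < area_coef) by (unfold area_coef; lra).
  set (eta := Rmin 1 (Rmin (area_coef * e / 2) (area_coef * e ^ 2 / 8))).
  assert (0 < area_coef * e) by (apply Rmult_lt_0_compat; lra).
  assert (0 < area_coef * e ^ 2) by (apply Rmult_lt_0_compat; [lra|apply pow_lt; lra]).
  assert (Heta : 0 < eta) by (unfold eta; repeat apply Rmin_pos; lra).
  assert (E1 : eta <= 1) by apply Rmin_l.
  assert (E2 : eta <= area_coef * e / 2)
    by (eapply Rle_trans; [apply Rmin_r|apply Rmin_l]).
  assert (E3 : eta <= area_coef * e ^ 2 / 8)
    by (eapply Rle_trans; [apply Rmin_r|apply Rmin_r]).
  exists eta; split; [exact Heta|].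
  intros q HA1 HA2 HB1 HB2 HZ.
  pose proof (bump_sign_abs q) as Hsign.
  apply pos_root_small; [exact Hk|apply Rabs_pos| |].
  - rewrite Rabs_mult, Rabs_Ropp, Hsign, Rmult_1_l.
    unfold cross_coef.
    eapply Rle_lt_trans; [apply Rabs_triang|].
    rewrite !Rabs_div, !Rabs_mult, Hsign, !(Rabs_pos_eq 2), (Rabs_pos_eq 315),
      (Rabs_pos_eq 105) by lra.
    pose proof (Rabs_triang (gA1 q) (- gB1 q)); pose proof (Rabs_triang (gA2 q) (gB2 q)).
    rewrite Rabs_Ropp in *; unfold Rminus; lra.
  - unfold area_defect.
    eapply Rle_lt_trans; [apply Rabs_triang|].
    rewrite Rabs_div, (Rabs_pos_eq 35) by lra.
    assert (Rabs (gA1 q * gB2 q - gB1 q * gA2 q) <= 2 * eta).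
    { unfold Rminus; eapply Rle_trans; [apply Rabs_triang|].
      rewrite Rabs_Ropp, !Rabs_mult.
      pose proof (Rabs_pos (gA1 q)); pose proof (Rabs_pos (gB2 q));
      pose proof (Rabs_pos (gB1 q)); pose proof (Rabs_pos (gA2 q)); nra. }
    lra.
Qed.

Lemma dY_small (e : R) : 0 < e -> exists eta, 0 < eta /\ forall q,
  Rabs (gA1 q) < eta -> Rabs (gA2 q) < eta -> Rabs (gB1 q) < eta -> Rabs (gB2 q) < eta ->
  Rabs (gZ q) < eta -> forall s, 0 <= s <= 1 -> Rabs (dY1 q s) < e /\ Rabs (dY2 q s) < e.
Proof.
  intros He.
  destruct (amplitude_small (e / 3300)) as [eta0 [Heta0 Hamp]]; [lra|].
  exists (Rmin eta0 (e / 3300)); split; [apply Rmin_pos; lra|].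
  intros q HA1 HA2 HB1 HB2 HZ s Hs.
  pose proof (Rmin_l eta0 (e / 3300)); pose proof (Rmin_r eta0 (e / 3300)).
  specialize (Hamp q ltac:(lra) ltac:(lra) ltac:(lra) ltac:(lra) ltac:(lra)).
  pose proof (bump_sign_abs q) as Hsign.
  destruct (profile_derivatives_bounded s Hs) as (B0 & B1 & Bb1 & Bb2).
  split.
  - pose proof (Rabs_comb3_le (gA1 q) (gB1 q) (amplitude q) _ _ _ _ B0 B1 Bb1).
    unfold dY1; lra.
  - pose proof (Rabs_comb3_le (gA2 q) (gB2 q) (amplitude q * bump_sign q) _ _ _ _ B0 B1 Bb2)
      as Hc.
    rewrite Rabs_mult, Hsign, Rmult_1_r in Hc.
    unfold dY2; lra.
Qed.

(** * Extending a curve with uniformly convergent Pansu quotients *)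

Definition unit_param (c d t : R) : R := (t - c) / (d - c).

Lemma is_derive_unit_param (c d t : R) : c < d -> is_derive (unit_param c d) t (/ (d - c)).
Proof. intros H; unfold unit_param; auto_derive; [auto|field; lra]. Qed.

Lemma is_derive_rescaled (F dF : R -> R) (x0 c d : R) : c < d ->
  (forall s, is_derive F s (dF s)) ->
  forall t, is_derive (fun t => x0 + (d - c) * F (unit_param c d t)) t (dF (unit_param c d t)).
Proof.
  intros Hcd HF t; unfold unit_param; auto_derive; [exists (dF ((t - c) / (d - c))); apply HF|].
  change ((t + - c) * / (d - c)) with ((t - c) / (d - c)).
  rewrite (is_derive_unique _ _ _ (HF _)); field; lra.
Qed.

(* The horizontal lift through [(x0, y0, z0)] of the rescaled planar curve
   [(x0 + L F, y0 + L G)], [L = d - c], when [Q] sweeps the area of [(F, G)]. *)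
Lemma is_derive_rescaled_lift (F G Q dF dG : R -> R) (x0 y0 z0 c d : R) : c < d ->
  (forall s, is_derive F s (dF s)) -> (forall s, is_derive G s (dG s)) ->
  (forall s, is_derive Q s (dF s * G s - F s * dG s)) ->
  forall t, is_derive
    (fun t => z0 + 2 * (d - c) * (y0 * F (unit_param c d t) - x0 * G (unit_param c d t))
              + 2 * (d - c) ^ 2 * Q (unit_param c d t)) t
    (2 * (dF (unit_param c d t) * (y0 + (d - c) * G (unit_param c d t))
          - (x0 + (d - c) * F (unit_param c d t)) * dG (unit_param c d t))).
Proof.
  intros Hcd HF HG HQ t; unfold unit_param.
  set (s := (t - c) / (d - c)).
  auto_derive.
  - repeat split; [exists (dF s)|exists (dG s)|exists (dF s * G s - F s * dG s)]; auto.
  - change ((t + - c) * / (d - c)) with s.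
    change (fun x => F x) with F; change (fun x => G x) with G; change (fun x => Q x) with Q.
    rewrite (is_derive_unique _ _ _ (HF s)), (is_derive_unique _ _ _ (HG s)),
      (is_derive_unique _ _ _ (HQ s)).
    field; lra.
Qed.

Section Extension.

Variables (K : R -> Prop) (gamma : R -> Hpt) (p : R -> R * R).
Hypothesis HK : compact K.
Hypothesis Hne : exists k, K k.
Hypothesis Hconv : pansu_conv_coords K gamma p.

Definition P1 (a : R) : R := fst (p a).
Definition P2 (a : R) : R := snd (p a).
Definition lift_rate (a : R) : R := 2 * (P1 a * X2 gamma a - X1 gamma a * P2 a).

Definition gap_jets (c d : R) : gap_data :=
  GapData (P1 c - slope (X1 gamma) c d) (P2 c - slope (X2 gamma) c d)
          (P1 d - slope (X1 gamma) c d) (P2 d - slope (X2 gamma) c d) (area_quot gamma c d).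

Definition fill1 (c d t : R) : R :=
  X1 gamma c + (d - c) * prof1 (gap_jets c d) (slope (X1 gamma) c d) (unit_param c d t).
Definition fill2 (c d t : R) : R :=
  X2 gamma c + (d - c) * prof2 (gap_jets c d) (slope (X2 gamma) c d) (unit_param c d t).
Definition fill3 (c d t : R) : R :=
  X3 gamma c
  + 2 * (d - c) * (X2 gamma c * prof1 (gap_jets c d) (slope (X1 gamma) c d) (unit_param c d t)
                   - X1 gamma c * prof2 (gap_jets c d) (slope (X2 gamma) c d) (unit_param c d t))
  + 2 * (d - c) ^ 2 * prof_area (gap_jets c d) (slope (X1 gamma) c d) (slope (X2 gamma) c d)
                        (unit_param c d t).
Definition fill1' (c d t : R) : R := slope (X1 gamma) c d + dY1 (gap_jets c d) (unit_param c d t).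
Definition fill2' (c d t : R) : R := slope (X2 gamma) c d + dY2 (gap_jets c d) (unit_param c d t).
Definition fill3' (c d t : R) : R := 2 * (fill1' c d t * fill2 c d t - fill1 c d t * fill2' c d t).

Definition line1 (a t : R) : R := X1 gamma a + P1 a * (t - a).
Definition line2 (a t : R) : R := X2 gamma a + P2 a * (t - a).
Definition line3 (a t : R) : R := X3 gamma a + lift_rate a * (t - a).
Definition line3' (a t : R) : R := 2 * (P1 a * line2 a t - line1 a t * P2 a).

Definition E1 : R -> R := glue K (X1 gamma) line1 fill1.
Definition E2 : R -> R := glue K (X2 gamma) line2 fill2.
Definition E3 : R -> R := glue K (X3 gamma) line3 fill3.
Definition D1 : R -> R := glue K P1 (fun a _ => P1 a) fill1'.
Definition D2 : R -> R := glue K P2 (fun a _ => P2 a) fill2'.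
Definition D3 : R -> R := glue K lift_rate line3' fill3'.

Lemma D3_horizontal : D3 = fun t => 2 * (D1 t * E2 t - E1 t * D2 t).
Proof.
  apply functional_extensionality; intros t.
  unfold D3, D1, D2, E1, E2, glue.
  destruct (excluded_middle_informative (K t)); [reflexivity|].
  destruct (Rlt_dec t (Kmin K)); [reflexivity|].
  destruct (Rlt_dec (Kmax K) t); reflexivity.
Qed.

Lemma fill_derive (c d : R) : c < d -> forall t,
  is_derive (fill1 c d) t (fill1' c d t) /\ is_derive (fill2 c d) t (fill2' c d t) /\
  is_derive (fill3 c d) t (fill3' c d t).
Proof.
  intros Hcd t; set (q := gap_jets c d).
  set (m1 := slope (X1 gamma) c d); set (m2 := slope (X2 gamma) c d).
  assert (H1 := is_derive_prof1 q m1); assert (H2 := is_derive_prof2 q m2).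
  split; [|split].
  - apply (is_derive_rescaled (prof1 q m1) (fun s => m1 + dY1 q s) _ c d Hcd H1).
  - apply (is_derive_rescaled (prof2 q m2) (fun s => m2 + dY2 q s) _ c d Hcd H2).
  - apply (is_derive_rescaled_lift (prof1 q m1) (prof2 q m2) (prof_area q m1 m2)
      (fun s => m1 + dY1 q s) (fun s => m2 + dY2 q s) _ _ _ c d Hcd H1 H2
      (is_derive_prof_area q m1 m2)).
Qed.

Lemma fill_derivative_continuous (c d : R) : c < d -> forall t,
  continuity_pt (fill1' c d) t /\ continuity_pt (fill2' c d) t /\
  continuity_pt (fill3' c d) t.
Proof.
  intros Hcd t.
  assert (Hu := is_derive_unit_param c d t Hcd).
  assert (H1 : ex_derive (fill1' c d) t).
  { unfold fill1'; auto_derive; exact (conj (ex_derive_dY1 _ _) (conj (ex_intro _ _ Hu) I)). }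
  assert (H2 : ex_derive (fill2' c d) t).
  { unfold fill2'; auto_derive; exact (conj (ex_derive_dY2 _ _) (conj (ex_intro _ _ Hu) I)). }
  destruct (fill_derive c d Hcd t) as (F1 & F2 & _).
  split; [|split]; apply continuity_pt_of_ex_derive; auto.
  unfold fill3'; auto_derive; repeat split; auto; eexists; eauto.
Qed.

Lemma fill_ends (c d : R) : c < d ->
  fill1 c d c = X1 gamma c /\ fill1 c d d = X1 gamma d /\
  fill2 c d c = X2 gamma c /\ fill2 c d d = X2 gamma d /\
  fill3 c d c = X3 gamma c /\ fill3 c d d = X3 gamma d /\
  fill1' c d c = P1 c /\ fill1' c d d = P1 d /\ fill2' c d c = P2 c /\ fill2' c d d = P2 d.
Proof.
  intros Hcd.
  assert (U0 : unit_param c d c = 0) by (unfold unit_param; field; lra).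
  assert (U1 : unit_param c d d = 1) by (unfold unit_param; field; lra).
  set (q := gap_jets c d); set (m1 := slope (X1 gamma) c d); set (m2 := slope (X2 gamma) c d).
  destruct (gap_profile_ends q m1 m2) as (F0 & F1 & G0 & G1 & dF0 & dF1 & dG0 & dG1 & Q0 & _).
  pose proof (gap_profile_area q m1 m2) as Q1.
  unfold fill1, fill2, fill3, fill1', fill2'; fold q m1 m2; rewrite U0, U1.
  rewrite F0, F1, G0, G1, dF0, dF1, dG0, dG1, Q0.
  replace (prof_area q m1 m2 1) with (gZ q / 2) by lra.
  unfold q, gap_jets, m1, m2, slope, area_quot; cbn [gA1 gA2 gB1 gB2 gZ].
  repeat split; field; lra.
Qed.

Lemma gaps_C1 :
  C1_on_gaps K E1 D1 /\ C1_on_gaps K E2 D2 /\ C1_on_gaps K E3 D3.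
Proof.
  assert (Hlines : forall a t,
    is_derive (line1 a) t (P1 a) /\ is_derive (line2 a) t (P2 a) /\
    is_derive (line3 a) t (line3' a t)).
  { intros a t; unfold line3, line3', line1, line2, lift_rate;
      split; [|split]; auto_derive; auto; ring. }
  assert (Hconst : forall (x : R) t, continuity_pt (fun _ => x) t)
    by (intros x t; apply continuity_pt_const; intros ? ?; reflexivity).
  assert (Hfill : forall c d, gap K c d -> forall t,
    (is_derive (fill1 c d) t (fill1' c d t) /\ is_derive (fill2 c d) t (fill2' c d t) /\
     is_derive (fill3 c d) t (fill3' c d t)) /\
    (continuity_pt (fill1' c d) t /\ continuity_pt (fill2' c d) t /\
     continuity_pt (fill3' c d) t))
    by (intros c d (_ & _ & Hcd & _) t;
        exact (conj (fill_derive c d Hcd t) (fill_derivative_continuous c d Hcd t))).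
  split; [|split]; apply glue_C1_on_gaps; auto.
  - intros a Ka; split; [|split; [|split]]; auto; [apply Hlines|unfold line1; ring].
  - intros c d Hgap; pose proof Hgap as (_ & _ & Hcd & _).
    destruct (fill_ends c d Hcd) as (? & ? & _ & _ & _ & _ & ? & ? & _).
    split; [|split]; auto; intros t; apply (Hfill c d Hgap t).
  - intros a Ka; split; [|split; [|split]]; auto; [apply Hlines|unfold line2; ring].
  - intros c d Hgap; pose proof Hgap as (_ & _ & Hcd & _).
    destruct (fill_ends c d Hcd) as (_ & _ & ? & ? & _ & _ & _ & _ & ? & ?).
    split; [|split]; auto; intros t; apply (Hfill c d Hgap t).
  - intros a Ka; split; [|split; [|split]]; [apply Hlines| |unfold line3; ring|].
    + intros t; apply continuity_pt_of_ex_derive; unfold line3', line1, line2; auto_derive; auto.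
    + unfold line3', line1, line2, lift_rate; ring.
  - intros c d Hgap; pose proof Hgap as (_ & _ & Hcd & _).
    destruct (fill_ends c d Hcd) as (? & ? & ? & ? & ? & ? & ? & ? & ? & ?).
    split; [|split]; [intros t; apply (Hfill c d Hgap t)|intros t; apply (Hfill c d Hgap t)|].
    unfold fill3', lift_rate; repeat split; congruence.
Qed.

Lemma whitney_diff_components :
  whitney_diff K E1 D1 /\ whitney_diff K E2 D2 /\ whitney_diff K E3 D3.
Proof.
  assert (Htriv : forall (F : R -> R) (l a e : R), 0 < e ->
    Rabs (F a - F a - l * (a - a)) <= e * Rabs (a - a))
    by (intros; rewrite !Rminus_eq_0, Rmult_0_r, Rminus_0_r, !Rabs_R0; lra).
  split; [|split]; intros a Ka e He.
  - destruct (Hconv e He) as [d [Hd Hc]]; exists d; split; [exact Hd|]; intros b Kb Hb.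
    unfold E1, D1; rewrite !glue_in by assumption.
    destruct (Req_dec b a) as [->|Hba]; [apply Htriv; lra|].
    rewrite remainder_of_slope, Rabs_mult by lra.
    apply Rmult_le_compat_r; [apply Rabs_pos|left; apply Hc; auto].
    split; [apply Rabs_pos_lt; lra|exact Hb].
  - destruct (Hconv e He) as [d [Hd Hc]]; exists d; split; [exact Hd|]; intros b Kb Hb.
    unfold E2, D2; rewrite !glue_in by assumption.
    destruct (Req_dec b a) as [->|Hba]; [apply Htriv; lra|].
    rewrite remainder_of_slope, Rabs_mult by lra.
    apply Rmult_le_compat_r; [apply Rabs_pos|left; apply Hc; auto].
    split; [apply Rabs_pos_lt; lra|exact Hb].
  - set (C := 1 + 2 * Rabs (X1 gamma a) + 2 * Rabs (X2 gamma a)).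
    assert (HC : 1 <= C) by (unfold C; pose proof (Rabs_pos (X1 gamma a));
      pose proof (Rabs_pos (X2 gamma a)); lra).
    destruct (Hconv (e / C)) as [d [Hd Hc]]; [apply Rdiv_lt_0_compat; lra|].
    exists (Rmin d 1); split; [apply Rmin_pos; lra|]; intros b Kb Hb.
    pose proof (Rmin_l d 1); pose proof (Rmin_r d 1).
    unfold E3, D3; rewrite !glue_in by assumption.
    destruct (Req_dec b a) as [->|Hba]; [apply Htriv; lra|].
    destruct (Hc a b Ka Kb) as (h1 & h2 & h3); [split; [apply Rabs_pos_lt|]; lra|].
    (* the third remainder is the area quotient plus the cross terms of the first two *)
    replace (X3 gamma b - X3 gamma a - lift_rate a * (b - a)) with
      (area_quot gamma a b * (b - a) * (b - a)
       + 2 * X2 gamma a * ((slope (X1 gamma) a b - P1 a) * (b - a))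
       - 2 * X1 gamma a * ((slope (X2 gamma) a b - P2 a) * (b - a)))
      by (unfold area_quot, slope, lift_rate; field; lra).
    unfold P1, P2 in *.
    set (u := area_quot gamma a b) in *; set (v := slope (X1 gamma) a b - fst (p a)) in *;
    set (w := slope (X2 gamma) a b - snd (p a)) in *; set (r := b - a) in *.
    assert (Hr1 : Rabs r <= 1) by lra.
    pose proof (Rabs_pos u); pose proof (Rabs_pos v); pose proof (Rabs_pos w);
    pose proof (Rabs_pos r); pose proof (Rabs_pos (X1 gamma a)); pose proof (Rabs_pos (X2 gamma a)).
    assert (Hsum : Rabs (u * r * r + 2 * X2 gamma a * (v * r) - 2 * X1 gamma a * (w * r))
      <= (Rabs u + 2 * Rabs (X2 gamma a) * Rabs v + 2 * Rabs (X1 gamma a) * Rabs w) * Rabs r).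
    { eapply Rle_trans; [apply Rabs_sub_le|].
      eapply Rle_trans; [apply Rplus_le_compat_r, Rabs_triang|].
      rewrite !Rabs_mult, (Rabs_pos_eq 2) by lra.
      assert (Rabs u * Rabs r * Rabs r <= Rabs u * Rabs r) by
        (rewrite Rmult_assoc; apply Rmult_le_compat_l; nra).
      nra. }
    eapply Rle_trans; [exact Hsum|]; apply Rmult_le_compat_r; [apply Rabs_pos|].
    assert (e / C * C = e) by (field; lra).
    assert (2 * Rabs (X2 gamma a) * Rabs v <= 2 * Rabs (X2 gamma a) * (e / C)) by nra.
    assert (2 * Rabs (X1 gamma a) * Rabs w <= 2 * Rabs (X1 gamma a) * (e / C)) by nra.
    unfold C in *; nra.
Qed.

Lemma derivatives_continuous_within : continuous_within K D1 /\ continuous_within K D2.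
Proof.
  assert (Hp : forall a, K a -> forall e, 0 < e -> exists d, 0 < d /\ forall b, K b ->
    Rabs (b - a) < d -> Rabs (P1 b - P1 a) < e /\ Rabs (P2 b - P2 a) < e).
  { intros a Ka e He; destruct (Hconv (e / 2)) as [d [Hd Hc]]; [lra|].
    exists d; split; [exact Hd|]; intros b Kb Hb.
    destruct (Req_dec b a) as [->|Hba]; [rewrite !Rminus_eq_0, Rabs_R0; split; lra|].
    assert (Hab : 0 < Rabs (b - a) < d) by (split; [apply Rabs_pos_lt|]; lra).
    destruct (Hc a b Ka Kb Hab) as (h1 & h2 & _).
    destruct (Hc b a Kb Ka) as (h3 & h4 & _); [rewrite Rabs_minus_sym; exact Hab|].
    rewrite <- (slope_sym (X1 gamma) a b) in h3 by lra.
    rewrite <- (slope_sym (X2 gamma) a b) in h4 by lra.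
    unfold P1, P2; split.
    - replace (fst (p b) - fst (p a))
        with ((slope (X1 gamma) a b - fst (p a)) - (slope (X1 gamma) a b - fst (p b))) by ring.
      eapply Rle_lt_trans; [apply Rabs_sub_le|lra].
    - replace (snd (p b) - snd (p a))
        with ((slope (X2 gamma) a b - snd (p a)) - (slope (X2 gamma) a b - snd (p b))) by ring.
      eapply Rle_lt_trans; [apply Rabs_sub_le|lra]. }
  split; intros a Ka e He; destruct (Hp a Ka e He) as [d [Hd H]]; exists d; split; auto;
    intros b Kb Hb; unfold D1, D2; rewrite !glue_in by assumption; apply H; auto.
Qed.

Lemma gap_jets_small (eta : R) : 0 < eta -> exists del, 0 < del /\ forall c d,
  gap K c d -> d - c < del ->
  Rabs (gA1 (gap_jets c d)) < eta /\ Rabs (gA2 (gap_jets c d)) < eta /\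
  Rabs (gB1 (gap_jets c d)) < eta /\ Rabs (gB2 (gap_jets c d)) < eta /\
  Rabs (gZ (gap_jets c d)) < eta.
Proof.
  intros Heta; destruct (Hconv eta Heta) as [del [Hdel Hc]].
  exists del; split; [exact Hdel|]; intros c d (Kc & Kd & Hcd & _) Hlen.
  assert (Hdc : 0 < Rabs (d - c) < del) by (rewrite Rabs_pos_eq; lra).
  assert (Hcd' : 0 < Rabs (c - d) < del) by (rewrite Rabs_minus_sym, Rabs_pos_eq; lra).
  destruct (Hc c d Kc Kd Hdc) as (h1 & h2 & h3).
  destruct (Hc d c Kd Kc Hcd') as (h4 & h5 & _).
  rewrite <- (slope_sym (X1 gamma) c d) in h4 by lra.
  rewrite <- (slope_sym (X2 gamma) c d) in h5 by lra.
  unfold gap_jets, P1, P2; cbn [gA1 gA2 gB1 gB2 gZ].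
  rewrite !(Rabs_minus_sym (fst _)), !(Rabs_minus_sym (snd _)); auto.
Qed.

Lemma derivatives_small_gap_oscillation :
  small_gap_oscillation K D1 /\ small_gap_oscillation K D2.
Proof.
  assert (Hosc : forall e, 0 < e -> exists eta, 0 < eta /\ forall c d t, gap K c d ->
    c < t < d -> d - c < eta ->
    (Rabs (D1 t - D1 c) < e /\ Rabs (D1 t - D1 d) < e) /\
    (Rabs (D2 t - D2 c) < e /\ Rabs (D2 t - D2 d) < e)).
  { intros e He.
    destruct (dY_small (e / 2)) as [eta0 [Heta0 Hs]]; [lra|].
    destruct (gap_jets_small (Rmin eta0 (e / 2))) as [del [Hdel Hj]]; [apply Rmin_pos; lra|].
    pose proof (Rmin_l eta0 (e / 2)); pose proof (Rmin_r eta0 (e / 2)).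
    exists del; split; [exact Hdel|]; intros c d t Hgap Ht Hlen.
    pose proof Hgap as (Kc & Kd & Hcd & _).
    destruct (Hj c d Hgap Hlen) as (A1 & A2 & B1 & B2 & Z).
    assert (Hu : 0 <= unit_param c d t <= 1).
    { unfold unit_param; split; [apply Rdiv_le_0_compat; lra|].
      apply (Rdiv_le_1 (t - c) (d - c)); lra. }
    destruct (Hs (gap_jets c d)) with (s := unit_param c d t) as [s1 s2]; try lra.
    unfold D1, D2.
    rewrite (glue_in K P1 _ _ c Kc), (glue_in K P1 _ _ d Kd), (glue_in K P2 _ _ c Kc),
      (glue_in K P2 _ _ d Kd), !(glue_gap K HK Hne _ _ _ c d t Hgap Ht).
    unfold fill1', fill2'.
    unfold gap_jets in A1, A2, B1, B2; cbn [gA1 gA2 gB1 gB2] in A1, A2, B1, B2.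
    set (y1 := dY1 (gap_jets c d) (unit_param c d t)) in *.
    set (y2 := dY2 (gap_jets c d) (unit_param c d t)) in *.
    assert (Hclose : forall x y z, Rabs x < e / 2 -> Rabs (y - z) < e / 2 ->
      Rabs (z + x - y) < e).
    { intros x y z Hx Hyz; replace (z + x - y) with (x - (y - z)) by ring.
      eapply Rle_lt_trans; [apply Rabs_sub_le|lra]. }
    repeat split; apply Hclose; auto; lra. }
  split; intros e He; destruct (Hosc e He) as [eta [Heta H]]; exists eta; split; auto;
    intros c d t Hgap Ht Hlen; apply (H c d t Hgap Ht Hlen).
Qed.

Lemma derivatives_constant_outside :
  (forall t, t < Kmin K -> D1 t = D1 (Kmin K) /\ D2 t = D2 (Kmin K) /\ D3 t = D3 (Kmin K)) /\
  (forall t, Kmax K < t -> D1 t = D1 (Kmax K) /\ D2 t = D2 (Kmax K) /\ D3 t = D3 (Kmax K)).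
Proof.
  destruct (Kmin_spec K HK Hne) as [Kmn _]; destruct (Kmax_spec K HK Hne) as [Kmx _].
  split; intros t Ht; unfold D1, D2, D3; repeat split.
  all: rewrite ?glue_below, ?glue_above, glue_in by assumption.
  all: unfold line3', line1, line2, lift_rate; ring.
Qed.

Theorem C1_H_of_pansu_conv : C1_H K gamma.
Proof.
  destruct gaps_C1 as (G1 & G2 & G3).
  destruct whitney_diff_components as (W1 & W2 & W3).
  destruct derivatives_continuous_within as [R1 R2].
  destruct derivatives_small_gap_oscillation as [S1 S2].
  pose proof (whitney_continuous K E1 D1 G1 HK R1 S1) as C1c.
  pose proof (whitney_continuous K E2 D2 G2 HK R2 S2) as C2c.
  pose proof (whitney_derive K E1 D1 G1 W1 (fun a _ => C1c a)) as d1.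
  pose proof (whitney_derive K E2 D2 G2 W2 (fun a _ => C2c a)) as d2.
  assert (C3c : forall t, continuity_pt D3 t).
  { intros t; rewrite D3_horizontal.
    apply continuity_pt_mult; [apply continuity_pt_const; intros ? ?; reflexivity|].
    apply continuity_pt_minus; apply continuity_pt_mult; auto;
      apply continuity_pt_of_ex_derive; eexists; eauto. }
  pose proof (whitney_derive K E3 D3 G3 W3 (fun a _ => C3c a)) as d3.
  destruct derivatives_constant_outside as [Hlo Hhi].
  assert (Hmm : Kmin K <= Kmax K)
    by (destruct (Kmin_spec K HK Hne) as [Kmn _]; apply (Kmax_spec K HK Hne), Kmn).
  destruct (bounded_of_continuous_const_outside D1 _ _ Hmm C1c (fun t H => proj1 (Hlo t H))
    (fun t H => proj1 (Hhi t H))) as [B1 HB1].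
  destruct (bounded_of_continuous_const_outside D2 _ _ Hmm C2c (fun t H => proj1 (proj2 (Hlo t H)))
    (fun t H => proj1 (proj2 (Hhi t H)))) as [B2 HB2].
  destruct (bounded_of_continuous_const_outside D3 _ _ Hmm C3c (fun t H => proj2 (proj2 (Hlo t H)))
    (fun t H => proj2 (proj2 (Hhi t H)))) as [B3 HB3].
  exists E1, E2, E3.
  refine (conj (C1_intro E1 D1 B1 d1 C1c HB1) (conj (C1_intro E2 D2 B2 d2 C2c HB2)
    (conj (C1_intro E3 D3 B3 d3 C3c HB3) (conj (conj (abs_cont_of_derive_bound E1 D1 B1 d1 HB1)
    (conj (abs_cont_of_derive_bound E2 D2 B2 d2 HB2)
    (conj (abs_cont_of_derive_bound E3 D3 B3 d3 HB3) _))) _)))).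
  - apply null_set_empty; intros t Ht; apply Ht.
    split; [eexists; apply d1|split; [eexists; apply d2|split; [eexists; apply d3|]]].
    rewrite (is_derive_unique _ _ _ (d1 t)), (is_derive_unique _ _ _ (d2 t)),
      (is_derive_unique _ _ _ (d3 t)), D3_horizontal; reflexivity.
  - intros t Kt; unfold E1, E2, E3; rewrite !glue_in by assumption.
    unfold X1, X2, X3; destruct (gamma t) as [[x y] z]; reflexivity.
Qed.

End Extension.

Lemma C1_H_empty (K : R -> Prop) (gamma : R -> Hpt) : (forall k, ~ K k) -> C1_H K gamma.
Proof.
  intros Hemp.
  assert (Hd : forall t, is_derive (fun _ => 0) t 0) by (intros t; auto_derive; auto).
  assert (Hc : forall t, continuity_pt (fun _ => 0) t)
    by (intros t; apply continuity_pt_const; intros ? ?; reflexivity).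
  assert (HB : forall t : R, Rabs 0 <= 0) by (intros; rewrite Rabs_R0; lra).
  pose proof (C1_intro _ _ 0 Hd Hc HB) as C0.
  pose proof (abs_cont_of_derive_bound _ _ 0 Hd HB) as A0.
  exists (fun _ => 0), (fun _ => 0), (fun _ => 0).
  refine (conj C0 (conj C0 (conj C0 (conj (conj A0 (conj A0 (conj A0 _))) _)))).
  - apply null_set_empty; intros t Ht; apply Ht.
    rewrite !Derive_const.
    split; [|split; [|split]]; [exists 0; apply Hd ..|ring].
  - intros t Kt; contradiction (Hemp t Kt).
Qed.

Theorem theorem1p4 (K : R -> Prop) (gamma : R -> Hpt) :
  compact K -> continuous_on_K K gamma ->
  (C1_H K gamma <->
   exists p : R -> R * R,
     forall eps : R, 0 < eps -> exists delta : R, 0 < delta /\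
       forall a b : R, K a -> K b -> 0 < Rabs (b - a) < delta ->
         enorm (hsub (hdil (/ (b - a)) (hmul (hinv (gamma a)) (gamma b)))
                     (horiz (p a))) < eps).
Proof.
  intros HK _.
  change (C1_H K gamma <-> exists p, pansu_conv K gamma p).
  split.
  - intros HC; destruct (C1_H_pansu_conv K gamma HK HC) as [p Hp].
    exists p; apply pansu_conv_iff_coords, Hp.
  - intros [p Hp]; apply pansu_conv_iff_coords in Hp.
    destruct (classic (exists k, K k)) as [Hne|Hemp].
    + exact (C1_H_of_pansu_conv K gamma p HK Hne Hp).
    + apply C1_H_empty; intros k Kk; apply Hemp; exists k; exact Kk.
Qed.
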